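(* Fix $s\in(0,1)$ and let $F,V_s,\psi_1,\psi_3,p_{+,s},q_{-,s},q_+$ and $\overline H_s$ be as in the context. Then $0<p_{+,s}<q_{-,s}<q_+$ and: (a) if $0\le p\le p_{+,s}$, then $\overline H_s(p)=0$; (b) if $p_{+,s}\le p\le q_{-,s}$, then $\overline H_s(p)$ is the unique $\lambda\in[0,1/3]$ with $p=\int_\lambda^{1/3}\psi_3(y)dy+\int_{1/2}^{1+\lambda}\psi_1(y)dy+\int_{1/3}^{1/2}[s\psi_1(y)+(1-s)\psi_3(y)]dy$; (c) if $q_{-,s}\le p\le q_+$, then $\overline H_s(p)=1/3$; (d) if $p\ge q_+$, then $\overline H_s(p)$ is the unique $\lambda\ge1/3$ with $p=\int_\lambda^{1+\lambda}\psi_1(y)dy$; (e) if $p<0$, then $\overline H_s(p)=\overline H_{1-s}(-p)$.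
   Context: $F:\mathbb R\to\mathbb R$ is smooth and even, and for some $0<\theta_3<\theta_2<\theta_1$: $F(0)=0$, $F(\theta_2)=1/2$, $F(\theta_1)=F(\theta_3)=1/3$, $F(r)\to+\infty$ as $r\to\infty$, $F$ strictly increasing on $[0,\theta_2]\cup[\theta_1,\infty)$ and strictly decreasing on $[\theta_2,\theta_1]$. For $r\in(0,1)$, $V_r$ is the $1$-periodic function with $V_r(x)=x/r$ for $0\le x\le r$ and $V_r(x)=(1-x)/(1-r)$ for $r<x\le1$, and $\overline H_r(p)$ is the unique constant $\lambda$ for which $F(w'(y))-V_r(y)=\lambda$ in $\mathbb R$ has a viscosity solution $w$ with $w(x)-px$ periodic. $\psi_1:=(F|_{[\theta_1,\infty)})^{-1}:[1/3,\infty)\to[\theta_1,\infty)$ and $\psi_3:=(F|_{[0,\theta_2]})^{-1}:[0,1/2]\to[0,\theta_2]$. Further, $p_{+,s}:=\int_0^{1/3}\psi_3+\int_{1/2}^1\psi_1+\int_{1/3}^{1/2}[s\psi_1+(1-s)\psi_3]$, $q_{-,s}:=\int_{1/2}^{4/3}\psi_1+\int_{1/3}^{1/2}[s\psi_1+(1-s)\psi_3]$, $q_+:=\int_{1/3}^{4/3}\psi_1$ (integrals in $dy$). *)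

From Stdlib Require Import Reals Lra ClassicalEpsilon.
From Coquelicot Require Import Coquelicot.
Open Scope R_scope.

Definition Vr (r x : R) : R :=
  let t := frac_part x in
  if Rle_dec t r then t / r else (1 - t) / (1 - r).

Definition C1 (phi : R -> R) : Prop :=
  (forall x, ex_derive phi x) /\ (forall x, continuous (Derive phi) x).

Definition local_max (f : R -> R) (x0 : R) : Prop :=
  exists d : R, 0 < d /\ forall x, Rabs (x - x0) < d -> f x <= f x0.

Definition local_min (f : R -> R) (x0 : R) : Prop :=
  exists d : R, 0 < d /\ forall x, Rabs (x - x0) < d -> f x0 <= f x.

Definition visc_subsol (F V : R -> R) (lam : R) (w : R -> R) : Prop :=
  forall phi x0, C1 phi -> local_max (fun x => w x - phi x) x0 ->
    F (Derive phi x0) - V x0 <= lam.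

Definition visc_supersol (F V : R -> R) (lam : R) (w : R -> R) : Prop :=
  forall phi x0, C1 phi -> local_min (fun x => w x - phi x) x0 ->
    F (Derive phi x0) - V x0 >= lam.

Definition visc_sol (F V : R -> R) (lam : R) (w : R -> R) : Prop :=
  (forall x, continuous w x) /\ visc_subsol F V lam w /\ visc_supersol F V lam w.

Definition cell_solvable (F : R -> R) (r p lam : R) : Prop :=
  exists w : R -> R, visc_sol F (Vr r) lam w /\
    forall x, w (x + 1) - p * (x + 1) = w x - p * x.

(* Effective Hamiltonian: the (unique) constant lam for which the cell
   problem is solvable. *)
Definition Hbar (F : R -> R) (r p : R) : R :=
  epsilon (inhabits 0) (fun lam => cell_solvable F r p lam).

Definition F_hyp (F : R -> R) (th1 th2 th3 : R) : Prop :=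
  (forall n x, ex_derive_n F n x) /\
  (forall x, F (- x) = F x) /\
  0 < th3 < th2 /\ th2 < th1 /\
  F 0 = 0 /\ F th2 = 1/2 /\ F th1 = 1/3 /\ F th3 = 1/3 /\
  (forall M, exists N, forall x, N <= x -> M <= F x) /\
  (forall x y, 0 <= x -> x < y -> y <= th2 -> F x < F y) /\
  (forall x y, th1 <= x -> x < y -> F x < F y) /\
  (forall x y, th2 <= x -> x < y -> y <= th1 -> F y < F x).

Definition psi1_spec (F psi1 : R -> R) (th1 : R) : Prop :=
  forall y, 1/3 <= y -> th1 <= psi1 y /\ F (psi1 y) = y.

Definition psi3_spec (F psi3 : R -> R) (th2 : R) : Prop :=
  forall y, 0 <= y <= 1/2 -> 0 <= psi3 y <= th2 /\ F (psi3 y) = y.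

Definition mix (s : R) (psi1 psi3 : R -> R) : R -> R :=
  fun y => s * psi1 y + (1 - s) * psi3 y.

Definition p_plus (s : R) (psi1 psi3 : R -> R) : R :=
  RInt psi3 0 (1/3) + RInt psi1 (1/2) 1 + RInt (mix s psi1 psi3) (1/3) (1/2).

Definition q_minus (s : R) (psi1 psi3 : R -> R) : R :=
  RInt psi1 (1/2) (4/3) + RInt (mix s psi1 psi3) (1/3) (1/2).

Definition q_plus (psi1 : R -> R) : R := RInt psi1 (1/3) (4/3).

Definition Gb (s : R) (psi1 psi3 : R -> R) (lam : R) : R :=
  RInt psi3 lam (1/3) + RInt psi1 (1/2) (1 + lam) + RInt (mix s psi1 psi3) (1/3) (1/2).

Definition Gd (psi1 : R -> R) (lam : R) : R := RInt psi1 lam (1 + lam).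

(* For every [p] an explicit viscosity solution of the cell problem is glued
   together from the inverse branches [psi1], [psi2], [psi3] of [F]: where the
   tent potential rises the slope of the solution at [y] is a branch evaluated
   at the level [lam + V_s y], where it falls another one, and at the levels
   where branches switch the kink passes the viscosity tests because [F] lies
   below (concave kinks) or above (convex kinks) the level between the two
   slopes.  Moving the switching levels continuously moves [p], so the
   intermediate value theorem realises every [p] of each regime with the
   stated [lam]; the comparison principle, proved by doubling the variables,
   makes [lam] unique, so it is [Hbar].  Negative [p] are reduced to positive
   ones by [x -> - x], which exchanges [s] and [1 - s]. *)

From Stdlib Require Import Reals Lra Lia ZArith ClassicalEpsilon FunctionalExtensionality PropExtensionality List.
From Coquelicot Require Import Coquelicot.
Open Scope R_scope.
Import ListNotations.

Lemma Int_frac_part_Z (x : R) (k : Z) :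
  IZR k <= x < IZR k + 1 -> Int_part x = k /\ frac_part x = x - IZR k.
Proof.
  intros H.
  destruct (Int_part_frac_part_spec x k (x - IZR k)) as [H1 H2]; [lra | lra |].
  split; auto.
Qed.

Lemma Rmin_dist u1 v1 u2 v2 M :
  Rabs (u1 - u2) <= M -> Rabs (v1 - v2) <= M -> Rabs (Rmin u1 v1 - Rmin u2 v2) <= M.
Proof.
  intros H1 H2; apply Rabs_le_between in H1; apply Rabs_le_between in H2.
  unfold Rmin; destruct (Rle_dec u1 v1), (Rle_dec u2 v2); apply Rabs_le; lra.
Qed.

Definition tent (s t : R) : R := Rmin (t / s) ((1 - t) / (1 - s)).

Section Tent.
Variable s : R.
Hypothesis Hs : 0 < s < 1.

Lemma tent_nonneg t : 0 <= t <= 1 -> 0 <= tent s t.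
Proof.
  intros Ht; unfold tent, Rdiv.
  apply Rmin_glb; apply Rmult_le_pos; try lra; left; apply Rinv_0_lt_compat; lra.
Qed.

Lemma tent_left t : 0 <= t <= s -> tent s t = t / s.
Proof.
  intros Ht; unfold tent; apply Rmin_left.
  apply Rle_trans with 1.
  - apply (Rmult_le_reg_r s); [lra |]. unfold Rdiv; rewrite Rmult_assoc, Rinv_l; lra.
  - apply (Rmult_le_reg_r (1 - s)); [lra |]. unfold Rdiv; rewrite Rmult_assoc, Rinv_l; lra.
Qed.

Lemma tent_right t : s <= t <= 1 -> tent s t = (1 - t) / (1 - s).
Proof.
  intros Ht; unfold tent; apply Rmin_right.
  apply Rle_trans with 1.
  - apply (Rmult_le_reg_r (1 - s)); [lra |]. unfold Rdiv; rewrite Rmult_assoc, Rinv_l; lra.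
  - apply (Rmult_le_reg_r s); [lra |]. unfold Rdiv; rewrite Rmult_assoc, Rinv_l; lra.
Qed.

Lemma Vr_tent x : Vr s x = tent s (frac_part x).
Proof.
  destruct (base_fp x) as [H0 H1].
  unfold Vr; destruct (Rle_dec (frac_part x) s).
  - rewrite tent_left; lra.
  - rewrite tent_right; lra.
Qed.

Lemma Vr_IZR_plus (k : Z) t : 0 <= t < 1 -> Vr s (IZR k + t) = tent s t.
Proof.
  intros Ht. rewrite Vr_tent.
  destruct (Int_frac_part_Z (IZR k + t) k) as [_ ->]; [lra |].
  f_equal; ring.
Qed.

Lemma tent_lipschitz t t' :
  Rabs (tent s t - tent s t') <= (/ s + / (1 - s)) * Rabs (t - t').
Proof.
  assert (is : 0 < / s) by (apply Rinv_0_lt_compat; lra).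
  assert (is' : 0 < / (1 - s)) by (apply Rinv_0_lt_compat; lra).
  pose proof (Rabs_pos (t - t')).
  apply Rmin_dist; unfold Rdiv.
  - replace (t * / s - t' * / s) with (/ s * (t - t')) by ring.
    rewrite Rabs_mult, (Rabs_right (/ s)) by lra. nra.
  - replace ((1 - t) * / (1 - s) - (1 - t') * / (1 - s)) with (- / (1 - s) * (t - t')) by ring.
    rewrite Rabs_mult, Rabs_left by lra. nra.
Qed.

Lemma Vr_lipschitz a b : Rabs (Vr s a - Vr s b) <= (/ s + / (1 - s)) * Rabs (a - b).
Proof.
  set (L := / s + / (1 - s)).
  assert (HL : 0 < L).
  { assert (0 < / s) by (apply Rinv_0_lt_compat; lra).
    assert (0 < / (1 - s)) by (apply Rinv_0_lt_compat; lra). unfold L; lra. }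
  enough (W : forall a b, a <= b -> Rabs (Vr s a - Vr s b) <= L * Rabs (a - b)).
  { destruct (Rle_dec a b); [auto |].
    rewrite Rabs_minus_sym, (Rabs_minus_sym a). apply W; lra. }
  clear a b; intros a b Hab. rewrite !Vr_tent. rewrite (Rabs_left1 (a - b)) by lra.
  destruct (base_Int_part a) as [Ha1 Ha2], (base_Int_part b) as [Hb1 Hb2].
  destruct (base_fp a) as [Fa1 Fa2], (base_fp b) as [Fb1 Fb2].
  assert (Ea : frac_part a = a - IZR (Int_part a)) by reflexivity.
  assert (Eb : frac_part b = b - IZR (Int_part b)) by reflexivity.
  destruct (Z.eq_dec (Int_part a) (Int_part b)) as [E | E].
  - eapply Rle_trans; [apply tent_lipschitz |]. fold L.
    apply Rmult_le_compat_l; [lra |]. rewrite Ea, Eb, E, Rabs_left1; lra.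
  - assert (Hk : IZR (Int_part a) + 1 <= IZR (Int_part b)).
    { rewrite <- plus_IZR. apply IZR_le.
      assert (Int_part a < Int_part b + 1)%Z; [| lia].
      apply lt_IZR. rewrite plus_IZR. lra. }
    (* [tent] vanishes at [0] and [1], and an integer lies between [a] and [b]. *)
    assert (Ta : tent s (frac_part a) <= L * (1 - frac_part a)).
    { pose proof (tent_lipschitz (frac_part a) 1) as T.
      rewrite (tent_right 1) in T by lra. fold L in T.
      replace ((1 - 1) / (1 - s)) with 0 in T by (unfold Rdiv; ring).
      rewrite Rminus_0_r, Rabs_pos_eq in T by (apply tent_nonneg; lra).
      rewrite Rabs_left1 in T by lra. lra. }
    assert (Tb : tent s (frac_part b) <= L * frac_part b).
    { pose proof (tent_lipschitz (frac_part b) 0) as T.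
      rewrite (tent_left 0) in T by lra. fold L in T.
      replace (0 / s) with 0 in T by (unfold Rdiv; ring).
      rewrite Rminus_0_r, Rabs_pos_eq in T by (apply tent_nonneg; lra).
      rewrite Rminus_0_r, Rabs_pos_eq in T by lra. lra. }
    pose proof (tent_nonneg (frac_part a) ltac:(lra)).
    pose proof (tent_nonneg (frac_part b) ltac:(lra)).
    apply Rabs_le. nra.
Qed.

End Tent.

Lemma Vr_opp s x : 0 < s < 1 -> Vr s (- x) = Vr (1 - s) x.
Proof.
  intros Hs. destruct (base_Int_part x) as [H1 H2]. set (k := Int_part x) in *.
  destruct (Req_dec x (IZR k)) as [E | E].
  - replace (- x) with (IZR (- k) + 0) by (rewrite opp_IZR; lra).
    replace x with (IZR k + 0) by lra.
    rewrite !Vr_IZR_plus by lra.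
    unfold tent, Rdiv. rewrite !Rmult_0_l, !Rmin_left; auto;
      apply Rmult_le_pos; try lra; left; apply Rinv_0_lt_compat; lra.
  - replace (- x) with (IZR (- k - 1) + (IZR k + 1 - x))
      by (rewrite minus_IZR, opp_IZR; simpl; ring).
    replace x with (IZR k + (x - IZR k)) at 2 by ring.
    rewrite !Vr_IZR_plus by lra.
    unfold tent. rewrite Rmin_comm. f_equal; f_equal; ring.
Qed.

(* Derivative from the side of [e]: [e = 1] gives the right derivative,
   [e = -1] the left one. *)
Definition side_deriv (e : R) (f : R -> R) (x d : R) : Prop :=
  forall eps, 0 < eps -> exists del, 0 < del /\
    forall h, 0 < h < del -> Rabs ((f (x + e * h) - f x) / (e * h) - d) < eps.

Section SideDerivatives.
Variable e : R.
Hypothesis He : e <> 0.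

Lemma is_derive_side_deriv f x d : is_derive f x d -> side_deriv e f x d.
Proof.
  intros H eps Heps. apply is_derive_Reals in H.
  destruct (H eps Heps) as [del Hdel].
  assert (Hae : 0 < Rabs e) by (apply Rabs_pos_lt; auto).
  exists (del / Rabs e). split; [apply Rdiv_lt_0_compat; auto; apply cond_pos |].
  intros h Hh. apply Hdel.
  - apply Rmult_integral_contrapositive; split; auto; lra.
  - rewrite Rabs_mult, (Rabs_pos_eq h) by lra.
    apply (Rmult_lt_reg_r (/ Rabs e)); [apply Rinv_0_lt_compat; auto |].
    replace (Rabs e * h * / Rabs e) with h by (field; lra). apply Hh.
Qed.

Lemma side_deriv_ext f g x d :
  (exists del, 0 < del /\ forall h, 0 <= h < del -> f (x + e * h) = g (x + e * h)) ->
  side_deriv e g x d -> side_deriv e f x d.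
Proof.
  intros [del0 [H0 Hfg]] H eps Heps. destruct (H eps Heps) as [del [Hd Hh]].
  exists (Rmin del del0). split; [apply Rmin_glb_lt; auto |].
  intros h Hh'. pose proof (Rmin_l del del0). pose proof (Rmin_r del del0).
  rewrite (Hfg h), <- (Rplus_0_r x), <- (Rmult_0_r e), (Hfg 0), Rmult_0_r, Rplus_0_r by lra.
  apply Hh; lra.
Qed.

Lemma side_deriv_const c x : side_deriv e (fun _ => c) x 0.
Proof.
  intros eps Heps. exists 1. split; [lra |]. intros h Hh.
  replace ((c - c) / (e * h) - 0) with 0 by (field; split; auto; lra).
  rewrite Rabs_R0; lra.
Qed.

Lemma side_deriv_plus f g x a b :
  side_deriv e f x a -> side_deriv e g x b -> side_deriv e (fun y => f y + g y) x (a + b).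
Proof.
  intros H1 H2 eps Heps.
  destruct (H1 (eps / 2)) as [d1 [Hd1 K1]]; [lra |].
  destruct (H2 (eps / 2)) as [d2 [Hd2 K2]]; [lra |].
  exists (Rmin d1 d2). split; [apply Rmin_glb_lt; auto |]. intros h Hh.
  pose proof (Rmin_l d1 d2). pose proof (Rmin_r d1 d2).
  specialize (K1 h ltac:(lra)). specialize (K2 h ltac:(lra)).
  replace ((f (x + e * h) + g (x + e * h) - (f x + g x)) / (e * h) - (a + b)) with
    (((f (x + e * h) - f x) / (e * h) - a) + ((g (x + e * h) - g x) / (e * h) - b))
    by (field; split; auto; lra).
  eapply Rle_lt_trans; [apply Rabs_triang | lra].
Qed.

Lemma side_deriv_scal c f x d : side_deriv e f x d -> side_deriv e (fun y => c * f y) x (c * d).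
Proof.
  intros H eps Heps. pose proof (Rabs_pos c).
  destruct (H (eps / (Rabs c + 1))) as [del [Hd K]]; [apply Rdiv_lt_0_compat; lra |].
  exists del. split; auto. intros h Hh. specialize (K h Hh).
  replace ((c * f (x + e * h) - c * f x) / (e * h) - c * d) with
    (c * ((f (x + e * h) - f x) / (e * h) - d)) by (field; split; auto; lra).
  rewrite Rabs_mult.
  apply (Rmult_lt_compat_l (Rabs c + 1)) in K; [| lra].
  replace ((Rabs c + 1) * (eps / (Rabs c + 1))) with eps in K by (field; lra).
  pose proof (Rabs_pos ((f (x + e * h) - f x) / (e * h) - d)). nra.
Qed.

Lemma side_deriv_minus f g x a b :
  side_deriv e f x a -> side_deriv e g x b -> side_deriv e (fun y => f y - g y) x (a - b).
Proof.
  intros Hf Hg. apply (side_deriv_ext _ (fun y => f y + -1 * g y)).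
  - exists 1. split; [lra |]. intros; ring.
  - replace (a - b) with (a + -1 * b) by ring.
    apply side_deriv_plus; auto. apply side_deriv_scal; auto.
Qed.

Lemma side_deriv_shift f x c d :
  side_deriv e f (x + c) d -> side_deriv e (fun y => f (y + c)) x d.
Proof.
  intros H eps Heps. destruct (H eps Heps) as [del [Hd K]].
  exists del. split; auto. intros h Hh.
  replace (x + e * h + c) with (x + c + e * h) by ring. apply K; auto.
Qed.

Lemma side_deriv_local_max f x d :
  side_deriv e f x d ->
  (exists del, 0 < del /\ forall h, 0 < h < del -> f (x + e * h) <= f x) -> e * d <= 0.
Proof.
  intros H [del0 [H0 Hmax]]. destruct (Rle_dec (e * d) 0) as [| Hn]; auto. exfalso.
  assert (Hd : 0 < Rabs d) by (apply Rabs_pos_lt; intros ->; lra).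
  destruct (H (Rabs d) Hd) as [del [Hdel K]].
  set (h := Rmin del del0 / 2).
  assert (Hh : 0 < h < del /\ h < del0).
  { unfold h. pose proof (Rmin_l del del0). pose proof (Rmin_r del del0).
    assert (0 < Rmin del del0) by (apply Rmin_glb_lt; auto). lra. }
  specialize (K h (proj1 Hh)). specialize (Hmax h ltac:(lra)).
  set (q := (f (x + e * h) - f x) / (e * h)) in K.
  (* [e q] is a difference quotient in [h > 0], hence nonpositive, while [q] has the sign of [d]. *)
  assert (Heq : e * q <= 0).
  { unfold q. replace (e * ((f (x + e * h) - f x) / (e * h))) with
      ((f (x + e * h) - f x) / h) by (field; split; auto; lra).
    unfold Rdiv. apply Rmult_le_0_r; [lra |]. left; apply Rinv_0_lt_compat; lra. }
  assert (Hqd : 0 < q * d).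
  { apply Rabs_def2 in K. unfold Rabs in *. destruct (Rcase_abs d); nra. }
  nra.
Qed.

Lemma side_deriv_cont f x d :
  side_deriv e f x d -> forall eps, 0 < eps -> exists del, 0 < del /\
    forall h, 0 <= h < del -> Rabs (f (x + e * h) - f x) < eps.
Proof.
  intros H eps Heps. destruct (H 1 ltac:(lra)) as [del [Hdel K]].
  set (M := (Rabs d + 1) * Rabs e).
  assert (HM : 0 < M).
  { unfold M. apply Rmult_lt_0_compat; [pose proof (Rabs_pos d); lra | apply Rabs_pos_lt; auto]. }
  exists (Rmin del (eps / M)). split; [apply Rmin_glb_lt; auto; apply Rdiv_lt_0_compat; auto |].
  intros h Hh. pose proof (Rmin_l del (eps / M)). pose proof (Rmin_r del (eps / M)).
  destruct (Req_dec h 0) as [-> | Hh0].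
  { rewrite Rmult_0_r, Rplus_0_r, Rminus_eq_0, Rabs_R0; auto. }
  specialize (K h ltac:(lra)).
  assert (Hq : Rabs ((f (x + e * h) - f x) / (e * h)) <= Rabs d + 1).
  { apply Rabs_def2 in K. apply Rabs_le. pose proof (Rle_abs d). pose proof (Rle_abs (- d)).
    rewrite Rabs_Ropp in *. lra. }
  replace (f (x + e * h) - f x) with ((f (x + e * h) - f x) / (e * h) * (e * h))
    by (field; split; auto).
  rewrite Rabs_mult, Rabs_mult, (Rabs_pos_eq h) by lra.
  apply Rle_lt_trans with (M * h).
  - unfold M. pose proof (Rabs_pos e).
    replace ((Rabs d + 1) * Rabs e * h) with ((Rabs d + 1) * (Rabs e * h)) by ring.
    apply Rmult_le_compat_r; [nra | auto].
  - apply Rlt_le_trans with (M * (eps / M)); [apply Rmult_lt_compat_l; lra |].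
    right; field; lra.
Qed.

End SideDerivatives.

Lemma side_deriv_comp_affine e f a k x d :
  e <> 0 -> k <> 0 ->
  side_deriv (k * e) f (a + k * x) d -> side_deriv e (fun y => f (a + k * y)) x (k * d).
Proof.
  intros He Hk H eps Heps.
  assert (Hak : 0 < Rabs k) by (apply Rabs_pos_lt; auto).
  destruct (H (eps / Rabs k)) as [del [Hd K]]; [apply Rdiv_lt_0_compat; auto |].
  exists del. split; auto. intros h Hh. specialize (K h Hh).
  replace (a + k * (x + e * h)) with (a + k * x + k * e * h) by ring.
  replace ((f (a + k * x + k * e * h) - f (a + k * x)) / (e * h) - k * d) with
    (k * ((f (a + k * x + k * e * h) - f (a + k * x)) / (k * e * h) - d))
    by (field; repeat split; auto; lra).
  rewrite Rabs_mult.
  apply (Rmult_lt_compat_l (Rabs k)) in K; auto.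
  replace (Rabs k * (eps / Rabs k)) with eps in K by (field; lra).
  exact K.
Qed.

Lemma side_deriv_rescale e c f x d :
  0 < c -> side_deriv e f x d -> side_deriv (c * e) f x d.
Proof.
  intros Hc H eps Heps. destruct (H eps Heps) as [del [Hd K]].
  exists (del / c). split; [apply Rdiv_lt_0_compat; auto |]. intros h Hh.
  replace (c * e * h) with (e * (c * h)) by ring. apply K. split; [nra |].
  apply (Rmult_lt_reg_r (/ c)); [apply Rinv_0_lt_compat; auto |].
  replace (c * h * / c) with h by (field; lra). apply Hh.
Qed.

Lemma side_derivs_continuous f x a b :
  side_deriv (-1) f x a -> side_deriv 1 f x b -> continuous f x.
Proof.
  intros Hl Hr. apply (proj1 (continuity_pt_filterlim f x)).
  intros eps Heps.
  destruct (side_deriv_cont (-1) ltac:(lra) f x a Hl eps Heps) as [d1 [Hd1 K1]].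
  destruct (side_deriv_cont 1 ltac:(lra) f x b Hr eps Heps) as [d2 [Hd2 K2]].
  exists (Rmin d1 d2). split; [apply Rmin_glb_lt; auto |].
  intros y [_ Hy]. simpl in *. unfold R_dist in *.
  pose proof (Rmin_l d1 d2). pose proof (Rmin_r d1 d2).
  destruct (Rle_dec x y).
  - replace y with (x + 1 * (y - x)) by ring. apply K2.
    rewrite Rabs_pos_eq in Hy; lra.
  - replace y with (x + -1 * (x - y)) by ring. apply K1.
    rewrite Rabs_left in Hy; lra.
Qed.

(* [a] and [b] are the left and right slopes at a point where the equation
   reads [F (w') = c]; the clauses are the sub- and supersolution tests, which
   only bite at a concave resp. convex kink. *)
Definition kink_admissible (F : R -> R) (a b c : R) : Prop :=
  (forall q, b <= q <= a -> F q <= c) /\ (forall q, a <= q <= b -> c <= F q).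

Lemma kink_admissible_smooth F a c : F a = c -> kink_admissible F a a c.
Proof. intros H. split; intros q Hq; replace q with a by lra; lra. Qed.

Lemma kink_admissible_concave F a b c :
  b < a -> (forall q, b <= q <= a -> F q <= c) -> kink_admissible F a b c.
Proof. intros H K. split; auto. intros q Hq; lra. Qed.

Lemma kink_admissible_convex F a b c :
  a < b -> (forall q, a <= q <= b -> c <= F q) -> kink_admissible F a b c.
Proof. intros H K. split; auto. intros q Hq; lra. Qed.

Lemma local_max_side_derivs g x0 a b :
  side_deriv (-1) g x0 a -> side_deriv 1 g x0 b -> local_max g x0 -> b <= 0 <= a.
Proof.
  intros Hl Hr [del [Hdel Hm]]. split.
  - rewrite <- (Rmult_1_l b). apply (side_deriv_local_max 1 ltac:(lra) g x0 b Hr).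
    exists del. split; auto. intros h Hh. apply Hm.
    rewrite Rabs_pos_eq; lra.
  - enough (-1 * a <= 0) by lra.
    apply (side_deriv_local_max (-1) ltac:(lra) g x0 a Hl).
    exists del. split; auto. intros h Hh. apply Hm.
    replace (x0 + -1 * h - x0) with (- h) by ring. rewrite Rabs_Ropp, Rabs_pos_eq; lra.
Qed.

Lemma visc_sol_of_kinks F V lam w :
  (forall x0, exists a b, side_deriv (-1) w x0 a /\ side_deriv 1 w x0 b /\
     kink_admissible F a b (V x0 + lam)) ->
  visc_sol F V lam w.
Proof.
  intros H. split; [| split].
  - intros x. destruct (H x) as (a & b & Ha & Hb & _).
    eapply side_derivs_continuous; eauto.
  - intros phi x0 [Hphi _] Hmax. destruct (H x0) as (a & b & Ha & Hb & [Kc _]).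
    pose proof (Derive_correct phi x0 (Hphi x0)) as Hd.
    destruct (local_max_side_derivs (fun x => w x - phi x) x0
                (a - Derive phi x0) (b - Derive phi x0)); auto;
      try (apply side_deriv_minus; auto; try lra; apply is_derive_side_deriv; auto; lra).
    assert (F (Derive phi x0) <= V x0 + lam) by (apply Kc; lra). lra.
  - intros phi x0 [Hphi _] [del [Hdel Hmin]]. destruct (H x0) as (a & b & Ha & Hb & [_ Kv]).
    pose proof (Derive_correct phi x0 (Hphi x0)) as Hd.
    destruct (local_max_side_derivs (fun x => phi x - w x) x0
                (Derive phi x0 - a) (Derive phi x0 - b));
      try (apply side_deriv_minus; auto; try lra; apply is_derive_side_deriv; auto; lra).
    { exists del. split; auto. intros x Hx. specialize (Hmin x Hx). lra. }
    assert (V x0 + lam <= F (Derive phi x0)) by (apply Kv; lra). lra.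
Qed.

Definition periodic_ext (p : R) (w0 : R -> R) (x : R) : R :=
  p * IZR (Int_part x) + w0 (frac_part x).

Section PeriodicExtension.
Variables (p : R) (w0 : R -> R).
Hypothesis Hjump : w0 1 = w0 0 + p.

Lemma periodic_ext_eq (k : Z) y :
  IZR k <= y <= IZR k + 1 -> periodic_ext p w0 y = p * IZR k + w0 (y - IZR k).
Proof.
  intros Hy. unfold periodic_ext. destruct (Req_dec y (IZR k + 1)) as [E | E].
  - destruct (Int_frac_part_Z y (k + 1)) as [-> ->]; [rewrite plus_IZR; lra |].
    rewrite plus_IZR, E.
    replace (IZR k + 1 - (IZR k + 1)) with 0 by ring.
    replace (IZR k + 1 - IZR k) with 1 by ring.
    rewrite Hjump. ring.
  - destruct (Int_frac_part_Z y k) as [-> ->]; [lra | reflexivity].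
Qed.

Lemma periodic_ext_periodic x :
  periodic_ext p w0 (x + 1) - p * (x + 1) = periodic_ext p w0 x - p * x.
Proof.
  destruct (base_Int_part x).
  rewrite (periodic_ext_eq (Int_part x) x), (periodic_ext_eq (Int_part x + 1) (x + 1));
    rewrite ?plus_IZR; try lra.
  replace (x + 1 - (IZR (Int_part x) + 1)) with (x - IZR (Int_part x)) by ring.
  ring.
Qed.

Lemma periodic_ext_side_deriv e (k : Z) x0 d del :
  e <> 0 -> 0 < del -> (forall h, 0 <= h < del -> IZR k <= x0 + e * h <= IZR k + 1) ->
  side_deriv e w0 (x0 - IZR k) d -> side_deriv e (periodic_ext p w0) x0 d.
Proof.
  intros He Hdel Hin Hd.
  apply (side_deriv_ext e _ (fun y => p * IZR k + w0 (y + - IZR k))).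
  - exists del. split; auto. intros h Hh. apply periodic_ext_eq; auto.
  - rewrite <- (Rplus_0_l d). apply (side_deriv_plus e He).
    + apply (side_deriv_const e He).
    + apply (side_deriv_shift e (fun y => w0 y)). exact Hd.
Qed.

End PeriodicExtension.

Lemma cell_solvable_of_profile F s lam p w0 :
  0 < s < 1 -> w0 1 = w0 0 + p ->
  (forall t, 0 < t < 1 -> exists a b, side_deriv (-1) w0 t a /\ side_deriv 1 w0 t b /\
     kink_admissible F a b (tent s t + lam)) ->
  (exists a b, side_deriv (-1) w0 1 a /\ side_deriv 1 w0 0 b /\ kink_admissible F a b lam) ->
  cell_solvable F s p lam.
Proof.
  intros Hs Hjump Hint Hend. exists (periodic_ext p w0).
  split; [| apply periodic_ext_periodic; auto].
  apply visc_sol_of_kinks. intros x0.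
  destruct (base_Int_part x0) as [B1 B2]. set (k := Int_part x0) in *.
  destruct (Req_dec x0 (IZR k)) as [E | E].
  - destruct Hend as (a & b & Ha & Hb & K). exists a, b. split; [| split].
    + apply (periodic_ext_side_deriv p w0 Hjump (-1) (k - 1) x0 a 1); try lra.
      * intros h Hh. rewrite minus_IZR. lra.
      * rewrite minus_IZR. replace (x0 - (IZR k - 1)) with 1 by lra. exact Ha.
    + apply (periodic_ext_side_deriv p w0 Hjump 1 k x0 b 1); try lra.
      * intros h Hh. lra.
      * replace (x0 - IZR k) with 0 by lra. exact Hb.
    + rewrite E, <- (Rplus_0_r (IZR k)), Vr_IZR_plus, tent_left by lra.
      unfold Rdiv. rewrite Rmult_0_l, Rplus_0_l. exact K.
  - set (t := x0 - IZR k).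
    destruct (Hint t) as (a & b & Ha & Hb & K); [unfold t; lra |].
    exists a, b. split; [| split].
    + apply (periodic_ext_side_deriv p w0 Hjump (-1) k x0 a t); auto; unfold t; try lra.
      intros h Hh. lra.
    + apply (periodic_ext_side_deriv p w0 Hjump 1 k x0 b (1 - t)); auto; unfold t; try lra.
      intros h Hh. lra.
    + replace x0 with (IZR k + t) by (unfold t; ring).
      rewrite Vr_IZR_plus by (unfold t; lra). exact K.
Qed.

(** * Comparison principle *)

Definition clamp (c d y : R) : R := Rmax c (Rmin y d).

Section Clamp.
Variables c d : R.
Hypothesis Hcd : c <= d.

Lemma clamp_in y : c <= clamp c d y <= d.
Proof. unfold clamp, Rmax, Rmin. repeat destruct Rle_dec; lra. Qed.

Lemma clamp_id y : c <= y <= d -> clamp c d y = y.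
Proof. intros. unfold clamp, Rmax, Rmin. repeat destruct Rle_dec; lra. Qed.

Lemma clamp_dist y y' : Rabs (clamp c d y - clamp c d y') <= Rabs (y - y').
Proof.
  pose proof (Rle_abs (y - y')). pose proof (Rle_abs (- (y - y'))). rewrite Rabs_Ropp in *.
  unfold clamp, Rmax, Rmin. apply Rabs_le. repeat destruct Rle_dec; lra.
Qed.

Lemma clamp_le y y' : y <= y' -> clamp c d y <= clamp c d y'.
Proof. intros. unfold clamp, Rmax, Rmin. repeat destruct Rle_dec; lra. Qed.

Lemma clamp_incr_le y y' : y <= y' -> clamp c d y' - clamp c d y <= y' - y.
Proof. intros. unfold clamp, Rmax, Rmin. repeat destruct Rle_dec; lra. Qed.

Lemma clamp_top y y' : clamp c d y = d -> y <= y' -> clamp c d y' = d.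
Proof. intros. unfold clamp, Rmax, Rmin in *. repeat destruct Rle_dec; lra. Qed.

Lemma clamp_bot y y' : clamp c d y = c -> y' <= y -> clamp c d y' = c.
Proof. intros. unfold clamp, Rmax, Rmin in *. repeat destruct Rle_dec; lra. Qed.

End Clamp.

Lemma lipschitz_continuous f K x :
  (forall y y', Rabs (f y - f y') <= K * Rabs (y - y')) -> continuous f x.
Proof.
  intros HK. apply (proj1 (continuity_pt_filterlim f x)). intros eps Heps.
  pose proof (Rabs_pos K).
  exists (eps / (Rabs K + 1)). split; [apply Rdiv_lt_0_compat; lra |].
  intros y [_ Hy]. simpl in *. unfold R_dist in *.
  pose proof (Rabs_pos (y - x)). pose proof (Rle_abs K).
  apply Rle_lt_trans with (Rabs K * Rabs (y - x)); [specialize (HK y x); nra |].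
  apply Rle_lt_trans with ((Rabs K + 1) * Rabs (y - x)); [nra |].
  apply (Rmult_lt_compat_l (Rabs K + 1)) in Hy; [| lra].
  replace ((Rabs K + 1) * (eps / (Rabs K + 1))) with eps in Hy by (field; lra). exact Hy.
Qed.

Section Periodic.
Variable u : R -> R.
Hypothesis Hper : forall x, u (x + 1) = u x.

Lemma periodic_INR n x : u (x + INR n) = u x.
Proof.
  revert x; induction n as [| n IH]; intros x.
  - simpl. rewrite Rplus_0_r; auto.
  - rewrite S_INR. replace (x + (INR n + 1)) with ((x + INR n) + 1) by ring.
    rewrite Hper. auto.
Qed.

Lemma periodic_IZR k x : u (x + IZR k) = u x.
Proof.
  destruct (Z_le_gt_dec 0 k) as [Hk | Hk].
  - rewrite <- (Z2Nat.id k Hk), <- INR_IZR_INZ. apply periodic_INR.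
  - assert (E : IZR k = - INR (Z.to_nat (- k))).
    { rewrite INR_IZR_INZ, Z2Nat.id by lia. rewrite opp_IZR. ring. }
    rewrite E, <- (periodic_INR (Z.to_nat (- k)) (x + - INR (Z.to_nat (- k)))).
    f_equal; ring.
Qed.

Lemma periodic_bounded : (forall x, continuous u x) -> exists M, forall x, Rabs (u x) <= M.
Proof.
  intros Hc.
  assert (Hc' : forall x, 0 <= x <= 1 -> continuity_pt u x)
    by (intros; apply continuity_pt_filterlim, Hc).
  destruct (continuity_ab_maj u 0 1) as [x1 [Hx1 _]]; [lra | auto |].
  destruct (continuity_ab_min u 0 1) as [x2 [Hx2 _]]; [lra | auto |].
  exists (Rabs (u x1) + Rabs (u x2)). intros x.
  replace x with (frac_part x + IZR (Int_part x)) by (unfold frac_part; ring).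
  rewrite periodic_IZR. destruct (base_fp x).
  specialize (Hx1 (frac_part x) ltac:(lra)). specialize (Hx2 (frac_part x) ltac:(lra)).
  pose proof (Rle_abs (u x1)). pose proof (Rle_abs (- u x2)). rewrite Rabs_Ropp in *.
  pose proof (Rabs_pos (u x1)). pose proof (Rabs_pos (u x2)).
  apply Rabs_le. lra.
Qed.

End Periodic.

Lemma periodic_diff_bounded u1 u2 :
  (forall x, u1 (x + 1) = u1 x) -> (forall x, u2 (x + 1) = u2 x) ->
  (forall x, continuous u1 x) -> (forall x, continuous u2 x) ->
  exists M, 0 <= M /\ forall x y, Rabs (u1 x - u2 y) <= M.
Proof.
  intros Hp1 Hp2 Hc1 Hc2.
  destruct (periodic_bounded u1 Hp1 Hc1) as [M1 HM1], (periodic_bounded u2 Hp2 Hc2) as [M2 HM2].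
  assert (Hu : forall x y, Rabs (u1 x - u2 y) <= M1 + M2).
  { intros x y. unfold Rminus. eapply Rle_trans; [apply Rabs_triang |].
    rewrite Rabs_Ropp. specialize (HM1 x). specialize (HM2 y). lra. }
  exists (M1 + M2). split; auto. eapply Rle_trans; [apply Rabs_pos | apply (Hu 0 0)].
Qed.

Lemma argmax_choice (Q : R -> R -> R) a b :
  a <= b -> (forall x y, continuous (Q x) y) ->
  exists ym : R -> R, forall x, a <= ym x <= b /\ forall y, a <= y <= b -> Q x y <= Q x (ym x).
Proof.
  intros Hab HQ.
  apply (choice (fun x y => a <= y <= b /\ forall y', a <= y' <= b -> Q x y' <= Q x y)).
  intros x.
  destruct (continuity_ab_maj (Q x) a b Hab) as [y [Hmax Hy]].
  - intros y _. apply continuity_pt_filterlim, HQ.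
  - exists y; auto.
Qed.

Lemma penalty_lipschitz c D x x' y :
  Rabs (x - y) <= D -> Rabs (x' - y) <= D ->
  Rabs (c * (x' - y) ^ 2 - c * (x - y) ^ 2) <= Rabs c * (2 * D) * Rabs (x - x').
Proof.
  intros Hx Hx'.
  replace (c * (x' - y) ^ 2 - c * (x - y) ^ 2) with (c * (x' - x) * ((x' - y) + (x - y))) by ring.
  rewrite !Rabs_mult, (Rabs_minus_sym x').
  assert (Rabs ((x' - y) + (x - y)) <= 2 * D) by (eapply Rle_trans; [apply Rabs_triang | lra]).
  assert (0 <= Rabs c * Rabs (x - x')) by (apply Rmult_le_pos; apply Rabs_pos).
  nra.
Qed.

(* Maximise first in [y], for [x] clamped to [[a, b]]: by [penalty_lipschitz]
   the resulting marginal is Lipschitz in [x], hence has a maximum on [[a, b]]. *)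
Lemma penalized_max_rect (g h : R -> R) c a b a' b' :
  (forall x, continuous g x) -> (forall y, continuous h y) -> a <= b -> a' <= b' ->
  exists xs ys, a <= xs <= b /\ a' <= ys <= b' /\
    forall x y, a <= x <= b -> a' <= y <= b' ->
      g x + h y - c * (x - y) ^ 2 <= g xs + h ys - c * (xs - ys) ^ 2.
Proof.
  intros Hg Hh Hab Hab'.
  set (Q := fun x y => h y - c * (x - y) ^ 2).
  destruct (argmax_choice (fun x => Q (clamp a b x)) a' b' Hab') as [ym Hym].
  { intros x y. unfold Q. apply (continuous_minus h (fun y => c * (clamp a b x - y) ^ 2)); auto.
    apply (@ex_derive_continuous R_AbsRing R_NormedModule). auto_derive. auto. }
  set (n := fun x => Q (clamp a b x) (ym x)).
  set (K := Rabs c * (2 * (Rabs (b - a') + Rabs (a - b')))).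
  assert (HK : 0 <= K).
  { apply Rmult_le_pos; [apply Rabs_pos |].
    pose proof (Rabs_pos (b - a')). pose proof (Rabs_pos (a - b')). lra. }
  assert (HQ : forall x x' y, a <= x <= b -> a <= x' <= b -> a' <= y <= b' ->
             Q x y <= Q x' y + K * Rabs (x - x')).
  { intros x x' y Hx Hx' Hy'.
    assert (Hd : forall z, a <= z <= b -> Rabs (z - y) <= Rabs (b - a') + Rabs (a - b')).
    { intros z Hz. pose proof (Rle_abs (b - a')). pose proof (Rle_abs (- (a - b'))).
      rewrite Rabs_Ropp in *. pose proof (Rabs_pos (b - a')). pose proof (Rabs_pos (a - b')).
      apply Rabs_le. lra. }
    pose proof (penalty_lipschitz c _ x x' y (Hd x Hx) (Hd x' Hx')) as HL.
    apply Rabs_le_between in HL. unfold Q, K. lra. }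
  assert (Hn : forall x x', n x <= n x' + K * Rabs (x - x')).
  { intros x x'. unfold n.
    pose proof (clamp_in a b Hab x). pose proof (clamp_in a b Hab x').
    eapply Rle_trans; [apply HQ; eauto; apply Hym |].
    apply Rplus_le_compat; [apply Hym, Hym |].
    apply Rmult_le_compat_l; [auto | apply clamp_dist; auto]. }
  destruct (continuity_ab_maj (fun x => g x + n x) a b) as [xs [Hxs Hxs_in]]; auto.
  { intros x _. apply continuity_pt_filterlim, (continuous_plus g n); auto.
    apply (lipschitz_continuous n K). intros y y'. apply Rabs_le.
    pose proof (Hn y y'). pose proof (Hn y' y). rewrite Rabs_minus_sym in H0. lra. }
  exists xs, (ym xs). destruct (Hym xs) as [Hys Hmax]. split; [| split]; auto.
  intros x y Hx Hy'. specialize (Hxs x Hx). destruct (Hym x) as [_ Hmx].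
  specialize (Hmx y Hy'). unfold n, Q in *. rewrite !(clamp_id a b) in * by auto. lra.
Qed.

Lemma penalty_dominates M p c a z :
  0 < c -> 0 <= M -> Rabs a <= M -> 1 + (Rabs p + 2 * M) / c < Rabs z ->
  a + p * z - c * z ^ 2 < - M.
Proof.
  intros Hc HM Ha Hz. set (d := Rabs z) in *.
  assert (Hsq : z ^ 2 = d * d) by (unfold d; rewrite <- pow2_abs; ring).
  assert (Hp : p * z <= Rabs p * d) by (unfold d; rewrite <- Rabs_mult; apply Rle_abs).
  assert (HcK : c * (1 + (Rabs p + 2 * M) / c) = c + Rabs p + 2 * M) by (field; lra).
  assert (c * (1 + (Rabs p + 2 * M) / c) < c * d) by (apply Rmult_lt_compat_l; lra).
  assert (1 <= d).
  { enough (0 <= (Rabs p + 2 * M) / c) by lra.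
    apply Rmult_le_pos; [pose proof (Rabs_pos p); lra | left; apply Rinv_0_lt_compat; lra]. }
  apply Rabs_le_between in Ha. rewrite Hsq. nra.
Qed.

Section Doubling.
Variables (u1 u2 : R -> R) (p c : R).
Hypothesis Hc : 0 < c.
Hypothesis Hper1 : forall x, u1 (x + 1) = u1 x.
Hypothesis Hper2 : forall x, u2 (x + 1) = u2 x.
Hypothesis Hcont1 : forall x, continuous u1 x.
Hypothesis Hcont2 : forall x, continuous u2 x.

(* By [penalty_dominates] the maximum over [[0, 1] x [-K, 1 + K]] is a maximum
   over the strip [0 <= x <= 1], and integer translations of the diagonal
   reduce everything to that strip. *)
Lemma doubling_global_max : exists xs ys, forall x y,
  u1 x - u2 y + p * (x - y) - c * (x - y) ^ 2 <=
  u1 xs - u2 ys + p * (xs - ys) - c * (xs - ys) ^ 2.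
Proof.
  set (Phi := fun x y => u1 x - u2 y + p * (x - y) - c * (x - y) ^ 2).
  change (exists xs ys, forall x y, Phi x y <= Phi xs ys).
  destruct (periodic_diff_bounded u1 u2 Hper1 Hper2 Hcont1 Hcont2) as [M [HM Hu]].
  set (K := 1 + (Rabs p + 2 * M) / c).
  assert (HK : 1 <= K).
  { enough (0 <= (Rabs p + 2 * M) / c) by (unfold K; lra).
    apply Rmult_le_pos; [pose proof (Rabs_pos p); lra | left; apply Rinv_0_lt_compat; lra]. }
  assert (Far : forall x y, K < Rabs (x - y) -> Phi x y < Phi 0 0).
  { intros x y Hxy. pose proof (Hu 0 0) as H0. apply Rabs_le_between in H0.
    pose proof (penalty_dominates M p c (u1 x - u2 y) (x - y) Hc HM (Hu x y) Hxy).
    unfold Phi. replace (0 - 0) with 0 by ring. lra. }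
  destruct (penalized_max_rect (fun x => u1 x + p * x) (fun y => - u2 y - p * y) c 0 1 (- K) (1 + K))
    as (xs & ys & Hxs & Hys & Hmax); [| | lra | lra |].
  { intros x. apply (continuous_plus u1 (fun x => p * x)); auto.
    apply (@ex_derive_continuous R_AbsRing R_NormedModule). auto_derive; auto. }
  { intros y. apply (continuous_minus (fun y => - u2 y) (fun y => p * y)).
    - apply (continuous_opp u2); auto.
    - apply (@ex_derive_continuous R_AbsRing R_NormedModule). auto_derive; auto. }
  assert (Hloc : forall x y, 0 <= x <= 1 -> - K <= y <= 1 + K -> Phi x y <= Phi xs ys).
  { intros x y Hx Hy. specialize (Hmax x y Hx Hy). unfold Phi. lra. }
  exists xs, ys. intros x y.
  destruct (base_Int_part x) as [Hk1 Hk2]. set (k := Int_part x) in *.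
  assert (Hshift : Phi x y = Phi (x - IZR k) (y - IZR k)).
  { unfold Phi, Rminus. rewrite <- (periodic_IZR u1 Hper1 (- k)), <- (periodic_IZR u2 Hper2 (- k)).
    rewrite opp_IZR. f_equal; [| f_equal]; f_equal; ring. }
  assert (H00 : Phi 0 0 <= Phi xs ys) by (apply Hloc; lra).
  rewrite Hshift.
  destruct (Rle_dec (- K) (y - IZR k)); [destruct (Rle_dec (y - IZR k) (1 + K)) |].
  - apply Hloc; lra.
  - left. eapply Rlt_le_trans; [apply Far | auto]. rewrite Rabs_left; lra.
  - left. eapply Rlt_le_trans; [apply Far | auto]. rewrite Rabs_pos_eq; lra.
Qed.

End Doubling.

Lemma quadratic_C1 a c :
  C1 (fun x => c * (x - a) ^ 2) /\ forall x, Derive (fun x => c * (x - a) ^ 2) x = 2 * c * (x - a).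
Proof.
  assert (D : forall x, is_derive (fun x => c * (x - a) ^ 2) x (2 * c * (x - a)))
    by (intros x; auto_derive; auto; ring).
  split; [split |]; intros x.
  - eexists; apply D.
  - apply (@continuous_ext R_UniformSpace R_UniformSpace (fun x => 2 * c * (x - a))).
    + intros y. symmetry. apply is_derive_unique, D.
    + apply (ex_derive_continuous (fun x => 2 * c * (x - a))). auto_derive; auto.
  - apply is_derive_unique, D.
Qed.

Lemma penalization_absurd M p eta d :
  0 <= M -> 0 < eta <= d ->
  ((2 * M / eta + Rabs p) / eta + 1) * d * d <= 2 * M + Rabs p * d -> False.
Proof.
  intros HM Hd Hdd. set (c := (2 * M / eta + Rabs p) / eta + 1) in *.
  assert (Hc : c * eta = 2 * M / eta + Rabs p + eta) by (unfold c; field; lra).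
  assert (HMe : 0 <= 2 * M / eta) by (apply Rmult_le_pos; [lra | left; apply Rinv_0_lt_compat; lra]).
  assert (Hc0 : 0 < c) by (apply (Rmult_lt_reg_r eta); [lra |]; pose proof (Rabs_pos p); lra).
  assert (HMd : 2 * M / d <= 2 * M / eta).
  { unfold Rdiv. apply Rmult_le_compat_l; [lra |]. apply Rinv_le_contravar; lra. }
  assert (c * d <= 2 * M / d + Rabs p).
  { apply (Rmult_le_reg_r d); [lra |].
    replace ((2 * M / d + Rabs p) * d) with (2 * M + Rabs p * d) by (field; lra). lra. }
  assert (c * eta <= c * d) by (apply Rmult_le_compat_l; lra).
  lra.
Qed.

Section Comparison.
Variables (F V : R -> R) (L p l1 l2 : R) (w1 w2 : R -> R).
Hypothesis HL : 0 < L.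
Hypothesis HV : forall a b, Rabs (V a - V b) <= L * Rabs (a - b).
Hypothesis Hcont1 : forall x, continuous w1 x.
Hypothesis Hcont2 : forall x, continuous w2 x.
Hypothesis Hsub : visc_subsol F V l1 w1.
Hypothesis Hsuper : visc_supersol F V l2 w2.
Hypothesis Hper1 : forall x, w1 (x + 1) - p * (x + 1) = w1 x - p * x.
Hypothesis Hper2 : forall x, w2 (x + 1) - p * (x + 1) = w2 x - p * x.

Lemma doubling_max_test c xs ys :
  (forall x y, w1 x - w2 y - c * (x - y) ^ 2 <= w1 xs - w2 ys - c * (xs - ys) ^ 2) ->
  F (2 * c * (xs - ys)) - V xs <= l1 /\ F (2 * c * (xs - ys)) - V ys >= l2.
Proof.
  intros Hmax. split.
  - destruct (quadratic_C1 ys c) as [HC HD].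
    rewrite <- (HD xs). apply Hsub; auto.
    exists 1. split; [lra |]. intros x _. specialize (Hmax x ys). lra.
  - destruct (quadratic_C1 xs (- c)) as [HC HD].
    replace (2 * c * (xs - ys)) with (2 * - c * (ys - xs)) by ring.
    rewrite <- (HD ys). apply Hsuper; auto.
    exists 1. split; [lra |]. intros y _. specialize (Hmax xs y).
    replace ((xs - y) ^ 2) with ((y - xs) ^ 2) in Hmax by ring.
    replace ((xs - ys) ^ 2) with ((ys - xs) ^ 2) in Hmax by ring. lra.
Qed.

(* Doubling of variables: at a maximum of [w1 x - w2 y - c (x - y)^2] the two
   viscosity inequalities hold with the same slope, so [l2 - l1 <= L |x - y|],
   while [|x - y| = O(1/c)]; a large [c] gives the contradiction. *)
Lemma comparison : l2 <= l1.
Proof.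
  destruct (Rle_dec l2 l1) as [| Hlt]; [auto | exfalso].
  set (u1 := fun x => w1 x - p * x). set (u2 := fun x => w2 x - p * x).
  assert (Hcu : forall w, (forall x, continuous w x) -> forall x, continuous (fun x => w x - p * x) x).
  { intros w Hw x. apply (continuous_minus w (fun x => p * x)); auto.
    apply (@ex_derive_continuous R_AbsRing R_NormedModule). auto_derive; auto. }
  destruct (periodic_diff_bounded u1 u2 Hper1 Hper2 (Hcu w1 Hcont1) (Hcu w2 Hcont2))
    as [M [HM0 HM]].
  set (eta := (l2 - l1) / L).
  assert (Heta : 0 < eta) by (apply Rdiv_lt_0_compat; lra).
  set (c := (2 * M / eta + Rabs p) / eta + 1).
  assert (Hc0 : 0 < c).
  { enough (0 <= (2 * M / eta + Rabs p) / eta) by (unfold c; lra).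
    assert (0 <= 2 * M / eta) by (apply Rmult_le_pos; [lra | left; apply Rinv_0_lt_compat; lra]).
    apply Rmult_le_pos; [pose proof (Rabs_pos p); lra | left; apply Rinv_0_lt_compat; lra]. }
  destruct (doubling_global_max u1 u2 p c Hc0 Hper1 Hper2 (Hcu w1 Hcont1) (Hcu w2 Hcont2))
    as (xs & ys & Hmax).
  destruct (doubling_max_test c xs ys) as [S1 S2].
  { intros x y. specialize (Hmax x y). unfold u1, u2 in Hmax. lra. }
  apply (penalization_absurd M p eta (Rabs (xs - ys)) HM0).
  - split; auto. pose proof (HV xs ys). pose proof (Rle_abs (V xs - V ys)).
    apply (Rmult_le_reg_l L); auto. unfold eta.
    replace (L * ((l2 - l1) / L)) with (l2 - l1) by (field; lra). lra.
  - specialize (Hmax xs xs). pose proof (HM xs ys) as H. pose proof (HM xs xs) as H0.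
    rewrite <- (pow2_abs (xs - ys)) in Hmax.
    assert (Hp : p * (xs - ys) <= Rabs p * Rabs (xs - ys)) by (rewrite <- Rabs_mult; apply Rle_abs).
    apply Rabs_le_between in H. apply Rabs_le_between in H0. fold c.
    replace (p * (xs - xs) - c * (xs - xs) ^ 2) with 0 in Hmax by ring. lra.
Qed.

End Comparison.

Lemma cell_unique F s p l1 l2 :
  0 < s < 1 -> cell_solvable F s p l1 -> cell_solvable F s p l2 -> l1 = l2.
Proof.
  intros Hs [w1 [[C1 [S1 T1]] P1]] [w2 [[C2 [S2 T2]] P2]].
  assert (HL : 0 < / s + / (1 - s)).
  { assert (0 < / s) by (apply Rinv_0_lt_compat; lra).
    assert (0 < / (1 - s)) by (apply Rinv_0_lt_compat; lra). lra. }
  apply Rle_antisym.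
  - apply (comparison F (Vr s) (/ s + / (1 - s)) p l2 l1 w2 w1); auto.
    intros; apply Vr_lipschitz; auto.
  - apply (comparison F (Vr s) (/ s + / (1 - s)) p l1 l2 w1 w2); auto.
    intros; apply Vr_lipschitz; auto.
Qed.

Lemma Hbar_eq F s p lam : 0 < s < 1 -> cell_solvable F s p lam -> Hbar F s p = lam.
Proof.
  intros Hs H. apply (cell_unique F s p); auto.
  apply (epsilon_spec (inhabits 0) (fun lam => cell_solvable F s p lam)). exists lam; auto.
Qed.

(** * Reflection *)

Lemma C1_comp_opp phi :
  C1 phi -> C1 (fun y => phi (- y)) /\ forall y, Derive (fun y => phi (- y)) y = - Derive phi (- y).
Proof.
  intros [Hd Hc].
  assert (D : forall y, is_derive (fun y => phi (- y)) y (- Derive phi (- y))).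
  { intros y. pose proof (Derive_correct phi (- y) (Hd (- y))) as Hphi.
    assert (Hopp : is_derive (fun y : R => - y) y (-1)) by (auto_derive; auto; ring).
    pose proof (is_derive_comp phi (fun y => - y) y _ _ Hphi Hopp) as Hcomp.
    replace (- Derive phi (- y)) with (scal (-1) (Derive phi (- y))); auto.
    unfold scal; simpl; unfold mult; simpl; ring. }
  split; [split |]; intros y.
  - eexists; apply D.
  - apply (@continuous_ext R_UniformSpace R_UniformSpace (fun y => - Derive phi (- y))).
    + intros z. symmetry. apply is_derive_unique, D.
    + apply (continuous_opp (fun y => Derive phi (- y))).
      apply (continuous_comp (fun y : R => - y) (Derive phi)); [| apply Hc].
      apply (ex_derive_continuous (fun y : R => - y)). auto_derive; auto.
  - apply is_derive_unique, D.
Qed.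

Lemma local_max_reflect (w phi : R -> R) x0 :
  local_max (fun x => w (- x) - phi x) x0 -> local_max (fun y => w y - phi (- y)) (- x0).
Proof.
  intros [d [Hd Hm]]. exists d. split; auto. intros y Hy.
  specialize (Hm (- y)). rewrite Ropp_involutive in *. apply Hm.
  replace (- y - x0) with (- (y - - x0)) by ring. rewrite Rabs_Ropp; auto.
Qed.

Lemma local_min_reflect (w phi : R -> R) x0 :
  local_min (fun x => w (- x) - phi x) x0 -> local_min (fun y => w y - phi (- y)) (- x0).
Proof.
  intros [d [Hd Hm]]. exists d. split; auto. intros y Hy.
  specialize (Hm (- y)). rewrite Ropp_involutive in *. apply Hm.
  replace (- y - x0) with (- (y - - x0)) by ring. rewrite Rabs_Ropp; auto.
Qed.

Lemma cell_solvable_reflect F s p lam :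
  (forall x, F (- x) = F x) -> 0 < s < 1 ->
  cell_solvable F s p lam -> cell_solvable F (1 - s) (- p) lam.
Proof.
  intros Feven Hs [w [[Hc [Hsub Hsup]] Hp]].
  exists (fun x => w (- x)). split; [split; [| split] |].
  - intros x. apply (continuous_comp (fun y : R => - y) w); [| apply Hc].
    apply (ex_derive_continuous (fun y : R => - y)). auto_derive; auto.
  - intros phi x0 Hphi Hmax. destruct (C1_comp_opp phi Hphi) as [C D].
    specialize (Hsub _ _ C (local_max_reflect w phi x0 Hmax)).
    rewrite D, Ropp_involutive, Feven, Vr_opp in Hsub; auto.
  - intros phi x0 Hphi Hmin. destruct (C1_comp_opp phi Hphi) as [C D].
    specialize (Hsup _ _ C (local_min_reflect w phi x0 Hmin)).
    rewrite D, Ropp_involutive, Feven, Vr_opp in Hsup; auto.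
  - intros x. pose proof (Hp (- x - 1)).
    replace (- x - 1 + 1) with (- x) in H by ring.
    replace (- (x + 1)) with (- x - 1) by ring. lra.
Qed.

Lemma Hbar_reflect F s p :
  (forall x, F (- x) = F x) -> 0 < s < 1 -> Hbar F s p = Hbar F (1 - s) (- p).
Proof.
  intros Feven Hs. unfold Hbar. f_equal.
  apply functional_extensionality. intros lam. apply propositional_extensionality. split.
  - apply cell_solvable_reflect; auto.
  - intros H. apply cell_solvable_reflect in H; auto; [| lra].
    replace (1 - (1 - s)) with s in H by ring. rewrite Ropp_involutive in H. auto.
Qed.

Lemma Hbar_graph F s (G : R -> R) (S : R -> Prop) p :
  0 < s < 1 -> (forall lam, S lam -> cell_solvable F s (G lam) lam) ->
  (exists lam, S lam /\ G lam = p) ->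
  (S (Hbar F s p) /\ p = G (Hbar F s p)) /\ (forall lam, S lam -> p = G lam -> lam = Hbar F s p).
Proof.
  intros Hs HG [lam [Hl <-]]. rewrite (Hbar_eq F s (G lam) lam Hs (HG lam Hl)).
  split; auto. intros lam' Hl' E. symmetry. apply (cell_unique F s (G lam)); auto.
  rewrite E. auto.
Qed.

Section InverseContinuity.
Variables (f g : R -> R) (a b c d : R).
Hypothesis Hcd : c <= d.
Hypothesis Hf : forall x y, a <= x -> x < y -> y <= b -> f x < f y.
Hypothesis Hg : forall y, c <= y <= d -> a <= g y <= b /\ f (g y) = y.

Lemma incr_le x y : a <= x -> x <= y -> y <= b -> f x <= f y.
Proof. intros. destruct (Req_dec x y); [subst; lra | left; apply Hf; lra]. Qed.

Lemma inverse_incr u v : c <= u -> u < v -> v <= d -> g u < g v.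
Proof.
  intros. destruct (Hg u) as [[A1 A2] A3]; [lra |]. destruct (Hg v) as [[B1 B2] B3]; [lra |].
  destruct (Rlt_dec (g u) (g v)) as [| n]; auto. exfalso.
  assert (f (g v) <= f (g u)) by (apply incr_le; lra). lra.
Qed.

Lemma inverse_le u v : c <= u -> u <= v -> v <= d -> g u <= g v.
Proof. intros. destruct (Req_dec u v); [subst; lra | left; apply inverse_incr; lra]. Qed.

Lemma inverse_lt_of_lt u x : c <= u <= d -> a <= x <= b -> u < f x -> g u < x.
Proof.
  intros. destruct (Hg u) as [[A1 A2] A3]; auto.
  destruct (Rlt_dec (g u) x) as [| n]; auto. exfalso.
  assert (f x <= f (g u)) by (apply incr_le; lra). lra.
Qed.

Lemma inverse_gt_of_gt u x : c <= u <= d -> a <= x <= b -> f x < u -> x < g u.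
Proof.
  intros. destruct (Hg u) as [[A1 A2] A3]; auto.
  destruct (Rlt_dec x (g u)) as [| n]; auto. exfalso.
  assert (f (g u) <= f x) by (apply incr_le; lra). lra.
Qed.

Lemma inverse_clamp_right_cont y0 eps : 0 < eps -> exists del, 0 < del /\
  forall y, y0 <= y < y0 + del -> g (clamp c d y) < g (clamp c d y0) + eps.
Proof.
  intros Heps. set (u0 := clamp c d y0).
  assert (Hu0 : c <= u0 <= d) by (apply clamp_in; auto).
  destruct (Req_dec u0 d) as [E | E].
  - exists 1. split; [lra |]. intros y Hy.
    rewrite (clamp_top c d Hcd y0 y), <- E; auto; lra.
  - destruct (Hg u0 Hu0) as [[X1 X2] X3].
    assert (Hgd : g u0 < g d) by (apply inverse_incr; lra).
    destruct (Hg d) as [[D1 D2] D3]; [lra |].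
    set (x1 := Rmin (g u0 + eps / 2) (g d)).
    assert (Hx1 : g u0 < x1 <= g d /\ x1 <= g u0 + eps / 2) by (unfold x1, Rmin; destruct Rle_dec; lra).
    assert (Hfx1 : u0 < f x1) by (rewrite <- X3; apply Hf; lra).
    exists (f x1 - u0). split; [lra |]. intros y Hy.
    assert (clamp c d y - u0 <= y - y0) by (apply clamp_incr_le; lra).
    assert (g (clamp c d y) < x1) by (apply inverse_lt_of_lt; try apply clamp_in; lra).
    lra.
Qed.

Lemma inverse_clamp_left_cont y0 eps : 0 < eps -> exists del, 0 < del /\
  forall y, y0 - del < y <= y0 -> g (clamp c d y0) - eps < g (clamp c d y).
Proof.
  intros Heps. set (u0 := clamp c d y0).
  assert (Hu0 : c <= u0 <= d) by (apply clamp_in; auto).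
  destruct (Req_dec u0 c) as [E | E].
  - exists 1. split; [lra |]. intros y Hy.
    rewrite (clamp_bot c d Hcd y0 y), <- E; auto; lra.
  - destruct (Hg u0 Hu0) as [[X1 X2] X3].
    assert (Hgc : g c < g u0) by (apply inverse_incr; lra).
    destruct (Hg c) as [[C1 C2] C3]; [lra |].
    set (x1 := Rmax (g u0 - eps / 2) (g c)).
    assert (Hx1 : g c <= x1 < g u0 /\ g u0 - eps / 2 <= x1) by (unfold x1, Rmax; destruct Rle_dec; lra).
    assert (Hfx1 : f x1 < u0) by (rewrite <- X3; apply Hf; lra).
    exists (u0 - f x1). split; [lra |]. intros y Hy.
    assert (u0 - clamp c d y <= y0 - y) by (apply clamp_incr_le; lra).
    assert (x1 < g (clamp c d y)) by (apply inverse_gt_of_gt; try apply clamp_in; lra).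
    lra.
Qed.

Lemma inverse_clamp_continuous y0 : continuous (fun y => g (clamp c d y)) y0.
Proof.
  apply (proj1 (continuity_pt_filterlim _ y0)). intros eps Heps.
  destruct (inverse_clamp_right_cont y0 eps Heps) as [d1 [Hd1 U]].
  destruct (inverse_clamp_left_cont y0 eps Heps) as [d2 [Hd2 L]].
  exists (Rmin d1 d2). split; [apply Rmin_glb_lt; auto |].
  intros y [_ Hy]. simpl in *. unfold R_dist in *.
  pose proof (Rmin_l d1 d2). pose proof (Rmin_r d1 d2). apply Rabs_lt_between in Hy.
  pose proof (clamp_in c d Hcd y). pose proof (clamp_in c d Hcd y0).
  apply Rabs_lt_between. destruct (Rle_dec y0 y).
  - assert (g (clamp c d y0) <= g (clamp c d y)) by (apply inverse_le; try apply clamp_le; lra).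
    specialize (U y ltac:(lra)). lra.
  - assert (g (clamp c d y) <= g (clamp c d y0)) by (apply inverse_le; try apply clamp_le; lra).
    specialize (L y ltac:(lra)). lra.
Qed.

End InverseContinuity.

Lemma RInt_antideriv (g G : R -> R) x y :
  (forall z, is_derive G z (g z)) -> (forall z, continuous g z) -> RInt g x y = G y - G x.
Proof. intros HD Hc. apply is_RInt_unique, (is_RInt_derive G g); auto. Qed.

Definition prim (b : R -> R) (y : R) : R := RInt b 0 y.

Section Primitive.
Variable b : R -> R.
Hypothesis Hb : forall x, continuous b x.

Lemma ex_RInt_cont x y : ex_RInt b x y.
Proof. apply (@ex_RInt_continuous R_CompleteNormedModule). intros; apply Hb. Qed.

Lemma is_derive_prim x : is_derive (prim b) x (b x).
Proof.
  apply (is_derive_RInt b (RInt b 0) 0 x); auto.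
  exists (mkposreal 1 Rlt_0_1). intros y _. apply (@RInt_correct R_CompleteNormedModule), ex_RInt_cont.
Qed.

Lemma RInt_prim x y : RInt b x y = prim b y - prim b x.
Proof. apply RInt_antideriv; auto. apply is_derive_prim. Qed.

Lemma prim_incr_lb x y m : x <= y -> (forall z, x <= z <= y -> m <= b z) ->
  m * (y - x) <= prim b y - prim b x.
Proof.
  intros Hxy Hm. rewrite <- RInt_prim.
  replace (m * (y - x)) with (RInt (fun _ => m) x y)
    by (rewrite RInt_const; unfold scal; simpl; unfold mult; simpl; ring).
  apply RInt_le; auto; [apply ex_RInt_const | apply ex_RInt_cont | intros; apply Hm; lra].
Qed.

Lemma prim_incr_ub x y m : x <= y -> (forall z, x <= z <= y -> b z <= m) ->
  prim b y - prim b x <= m * (y - x).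
Proof.
  intros Hxy Hm. rewrite <- RInt_prim.
  replace (m * (y - x)) with (RInt (fun _ => m) x y)
    by (rewrite RInt_const; unfold scal; simpl; unfold mult; simpl; ring).
  apply RInt_le; auto; [apply ex_RInt_cont | apply ex_RInt_const | intros; apply Hm; lra].
Qed.

End Primitive.

Lemma IVT_value f a b v : (forall x, continuous f x) -> a <= b -> (f a - v) * (f b - v) <= 0 ->
  exists u, a <= u <= b /\ f u = v.
Proof.
  intros Hc Hab Hs. destruct (IVT_cor (fun x => f x - v) a b) as [u [Hu E]]; auto.
  - intros x. apply continuity_pt_minus; [apply continuity_pt_filterlim, Hc |].
    apply continuity_pt_const. intros ? ?; auto.
  - exists u. split; auto. lra.
Qed.

Lemma sign_change_split d0 d1 d2 : d0 * d2 <= 0 -> d0 * d1 <= 0 \/ d1 * d2 <= 0.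
Proof.
  intros H. destruct (Rle_dec (d0 * d1) 0); auto. destruct (Rle_dec (d1 * d2) 0); auto.
  exfalso. assert (0 < (d0 * d1) * (d1 * d2)) by (apply Rmult_lt_0_compat; lra).
  assert ((d0 * d1) * (d1 * d2) = (d0 * d2) * (d1 * d1)) by ring. nra.
Qed.

(** * Profiles *)

(* A piece integrates the slope [pc_slope] over the levels of [[pc_lo, pc_hi]]. *)
Record piece := Piece { pc_prim : R -> R; pc_slope : R -> R; pc_lo : R; pc_hi : R }.

Definition piece_ok (P : piece) : Prop :=
  pc_lo P <= pc_hi P /\ forall x, is_derive (pc_prim P) x (pc_slope P x).

Definition piece_height (P : piece) (l : R) : R :=
  pc_prim P (clamp (pc_lo P) (pc_hi P) l) - pc_prim P (pc_lo P).

Definition piece_rslope (P : piece) (l : R) : R :=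
  if Rle_dec (pc_lo P) l then if Rlt_dec l (pc_hi P) then pc_slope P l else 0 else 0.

Definition piece_lslope (P : piece) (l : R) : R :=
  if Rlt_dec (pc_lo P) l then if Rle_dec l (pc_hi P) then pc_slope P l else 0 else 0.

Section Piece.
Variable P : piece.
Hypothesis HP : piece_ok P.

Lemma piece_side_deriv_inside e l del :
  e <> 0 -> 0 < del -> (forall h, 0 <= h < del -> pc_lo P <= l + e * h <= pc_hi P) ->
  side_deriv e (piece_height P) l (pc_slope P l).
Proof.
  intros He Hdel Hin. destruct HP as [Hlh HD].
  apply (side_deriv_ext e _ (fun y => pc_prim P y - pc_prim P (pc_lo P))).
  - exists del. split; auto. intros h Hh. unfold piece_height. rewrite clamp_id; auto.
  - rewrite <- (Rminus_0_r (pc_slope P l)). apply side_deriv_minus; auto.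
    + apply is_derive_side_deriv; auto.
    + apply side_deriv_const; auto.
Qed.

Lemma piece_side_deriv_flat e l del :
  e <> 0 -> 0 < del ->
  (forall h, 0 <= h < del -> clamp (pc_lo P) (pc_hi P) (l + e * h) = clamp (pc_lo P) (pc_hi P) l) ->
  side_deriv e (piece_height P) l 0.
Proof.
  intros He Hdel Hflat.
  apply (side_deriv_ext e _ (fun _ => piece_height P l)); [| apply side_deriv_const; auto].
  exists del. split; auto. intros h Hh. unfold piece_height. rewrite Hflat; auto.
Qed.

Ltac clamp_cases := unfold clamp, Rmax, Rmin; repeat destruct Rle_dec; try lra; f_equal; lra.

Lemma piece_rderiv l : side_deriv 1 (piece_height P) l (piece_rslope P l).
Proof.
  unfold piece_rslope. destruct (Rle_dec (pc_lo P) l); [destruct (Rlt_dec l (pc_hi P)) |].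
  - apply (piece_side_deriv_inside 1 l (pc_hi P - l)); try lra. intros h Hh. lra.
  - apply (piece_side_deriv_flat 1 l 1); try lra. intros h Hh. destruct HP. clamp_cases.
  - apply (piece_side_deriv_flat 1 l (pc_lo P - l)); try lra. intros h Hh. destruct HP. clamp_cases.
Qed.

Lemma piece_lderiv l : side_deriv (-1) (piece_height P) l (piece_lslope P l).
Proof.
  unfold piece_lslope. destruct (Rlt_dec (pc_lo P) l); [destruct (Rle_dec l (pc_hi P)) |].
  - apply (piece_side_deriv_inside (-1) l (l - pc_lo P)); try lra. intros h Hh. lra.
  - apply (piece_side_deriv_flat (-1) l (l - pc_hi P)); try lra. intros h Hh. destruct HP. clamp_cases.
  - apply (piece_side_deriv_flat (-1) l 1); try lra. intros h Hh. destruct HP. clamp_cases.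
Qed.

End Piece.

Fixpoint height (ps : list piece) (l : R) : R :=
  match ps with [] => 0 | P :: ps' => piece_height P l + height ps' l end.

Fixpoint rslope (ps : list piece) (l : R) : R :=
  match ps with [] => 0 | P :: ps' => piece_rslope P l + rslope ps' l end.

Fixpoint lslope (ps : list piece) (l : R) : R :=
  match ps with [] => 0 | P :: ps' => piece_lslope P l + lslope ps' l end.

Lemma height_rderiv ps l : List.Forall piece_ok ps -> side_deriv 1 (height ps) l (rslope ps l).
Proof.
  induction ps as [| P ps IH]; intros H; simpl; [apply side_deriv_const; lra |].
  inversion H; subst. apply (side_deriv_plus 1 ltac:(lra) (piece_height P) (height ps)); auto.
  apply piece_rderiv; auto.
Qed.

Lemma height_lderiv ps l : List.Forall piece_ok ps -> side_deriv (-1) (height ps) l (lslope ps l).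
Proof.
  induction ps as [| P ps IH]; intros H; simpl; [apply side_deriv_const; lra |].
  inversion H; subst. apply (side_deriv_plus (-1) ltac:(lra) (piece_height P) (height ps)); auto.
  apply piece_lderiv; auto.
Qed.

Lemma height_below ps l :
  List.Forall (fun P => l <= pc_lo P <= pc_hi P) ps -> height ps l = 0.
Proof.
  induction ps as [| P ps IH]; intros H; simpl; auto. inversion H; subst.
  rewrite IH; auto. unfold piece_height.
  rewrite (clamp_bot (pc_lo P) (pc_hi P) ltac:(lra) (pc_lo P)); [ring | | lra].
  apply clamp_id; lra.
Qed.

Lemma height_above ps l :
  List.Forall (fun P => pc_lo P <= pc_hi P <= l) ps ->
  height ps l = fold_right (fun P acc => pc_prim P (pc_hi P) - pc_prim P (pc_lo P) + acc) 0 ps.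
Proof.
  induction ps as [| P ps IH]; intros H; simpl; auto. inversion H; subst.
  rewrite IH; auto. unfold piece_height.
  rewrite (clamp_top (pc_lo P) (pc_hi P) ltac:(lra) (pc_hi P)); auto; [| lra].
  apply clamp_id; lra.
Qed.

Section TwoProfiles.
Variables (F : R -> R) (s lam : R) (PI PD : list piece).
Hypothesis Hs : 0 < s < 1.

(* On [[0, s]] the level [lam + V_s y] rises from [lam] to [lam + 1] and the
   slope of the solution is read from [PI] at that level; on [[s, 1]] the level
   falls back and the slope is read from [PD]. *)
Definition profiles_p : R := s * height PI (lam + 1) + (1 - s) * height PD (lam + 1).

Definition w_up (y : R) : R := s * height PI (lam + / s * y).

Definition w_down (y : R) : R :=
  profiles_p - (1 - s) * height PD (lam + / (1 - s) + - / (1 - s) * y).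

Definition w_cell (y : R) : R := if Rle_dec y s then w_up y else w_down y.

Lemma w_up_side_deriv e t d :
  e <> 0 -> side_deriv e (height PI) (lam + / s * t) d -> side_deriv e w_up t d.
Proof.
  intros He Hd. assert (Hi : 0 < / s) by (apply Rinv_0_lt_compat; lra).
  replace d with (s * (/ s * d)) by (field; lra).
  apply side_deriv_scal; auto. apply side_deriv_comp_affine; auto; [lra |].
  apply side_deriv_rescale; auto.
Qed.

Lemma w_down_side_deriv e t d :
  e <> 0 -> side_deriv (- e) (height PD) (lam + / (1 - s) + - / (1 - s) * t) d ->
  side_deriv e w_down t d.
Proof.
  intros He Hd. assert (Hi : 0 < / (1 - s)) by (apply Rinv_0_lt_compat; lra).
  unfold w_down. replace d with (0 - (1 - s) * (- / (1 - s) * d)) by (field; lra).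
  apply side_deriv_minus; auto; [apply side_deriv_const; auto |].
  apply side_deriv_scal; auto. apply side_deriv_comp_affine; auto; [lra |].
  replace (- / (1 - s) * e) with (/ (1 - s) * - e) by ring.
  apply side_deriv_rescale; auto.
Qed.

Lemma w_cell_up y : y <= s -> w_cell y = w_up y.
Proof. intros. unfold w_cell. destruct Rle_dec; [auto | lra]. Qed.

Lemma w_cell_down y : s <= y -> w_cell y = w_down y.
Proof.
  intros. unfold w_cell. destruct Rle_dec; [| auto].
  assert (y = s) by lra. subst y. unfold w_up, w_down, profiles_p.
  replace (lam + / s * s) with (lam + 1) by (field; lra).
  replace (lam + / (1 - s) + - / (1 - s) * s) with (lam + 1) by (field; lra). ring.
Qed.

Hypothesis okI : List.Forall piece_ok PI.
Hypothesis okD : List.Forall piece_ok PD.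
Hypothesis aboveI : List.Forall (fun P => lam <= pc_lo P <= pc_hi P) PI.
Hypothesis aboveD : List.Forall (fun P => lam <= pc_lo P <= pc_hi P) PD.
Hypothesis kinks_up : forall l, lam < l < lam + 1 -> kink_admissible F (lslope PI l) (rslope PI l) l.
Hypothesis kinks_down : forall l, lam < l < lam + 1 -> kink_admissible F (rslope PD l) (lslope PD l) l.
Hypothesis kink_top : kink_admissible F (lslope PI (lam + 1)) (lslope PD (lam + 1)) (lam + 1).
Hypothesis kink_bottom : kink_admissible F (rslope PD lam) (rslope PI lam) lam.

Lemma w_cell_lderiv_up t : 0 < t <= s -> side_deriv (-1) w_cell t (lslope PI (lam + / s * t)).
Proof.
  intros Ht. apply (side_deriv_ext (-1) _ w_up).
  - exists 1. split; [lra |]. intros h Hh. apply w_cell_up. lra.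
  - apply w_up_side_deriv; [lra |]. apply height_lderiv; auto.
Qed.

Lemma w_cell_rderiv_up t : 0 <= t < s -> side_deriv 1 w_cell t (rslope PI (lam + / s * t)).
Proof.
  intros Ht. apply (side_deriv_ext 1 _ w_up).
  - exists (s - t). split; [lra |]. intros h Hh. apply w_cell_up. lra.
  - apply w_up_side_deriv; [lra |]. apply height_rderiv; auto.
Qed.

Lemma w_cell_lderiv_down t : s < t ->
  side_deriv (-1) w_cell t (rslope PD (lam + / (1 - s) + - / (1 - s) * t)).
Proof.
  intros Ht. apply (side_deriv_ext (-1) _ w_down).
  - exists (t - s). split; [lra |]. intros h Hh. apply w_cell_down. lra.
  - apply w_down_side_deriv; [lra |]. replace (- -1) with 1 by ring. apply height_rderiv; auto.
Qed.

Lemma w_cell_rderiv_down t : s <= t ->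
  side_deriv 1 w_cell t (lslope PD (lam + / (1 - s) + - / (1 - s) * t)).
Proof.
  intros Ht. apply (side_deriv_ext 1 _ w_down).
  - exists 1. split; [lra |]. intros h Hh. apply w_cell_down. lra.
  - apply w_down_side_deriv; [lra |]. apply height_lderiv; auto.
Qed.

Lemma w_cell_kinks t : 0 < t < 1 -> exists a b,
  side_deriv (-1) w_cell t a /\ side_deriv 1 w_cell t b /\ kink_admissible F a b (tent s t + lam).
Proof.
  intros Ht. assert (Hi : 0 < / s) by (apply Rinv_0_lt_compat; lra).
  assert (Hi' : 0 < / (1 - s)) by (apply Rinv_0_lt_compat; lra).
  destruct (Rtotal_order t s) as [Hlt | [-> | Hgt]].
  - do 2 eexists. split; [| split]; [apply w_cell_lderiv_up | apply w_cell_rderiv_up |]; try lra.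
    replace (tent s t + lam) with (lam + / s * t) by (rewrite tent_left by lra; unfold Rdiv; ring).
    apply kinks_up.
    assert (0 < / s * t < 1); [split; [nra |] | lra].
    apply (Rmult_lt_reg_l s); [lra |]. replace (s * (/ s * t)) with t by (field; lra). lra.
  - do 2 eexists. split; [| split]; [apply w_cell_lderiv_up | apply w_cell_rderiv_down |]; try lra.
    rewrite tent_left by lra. replace (s / s + lam) with (lam + 1) by (field; lra).
    replace (lam + / s * s) with (lam + 1) by (field; lra).
    replace (lam + / (1 - s) + - / (1 - s) * s) with (lam + 1) by (field; lra).
    exact kink_top.
  - do 2 eexists. split; [| split]; [apply w_cell_lderiv_down | apply w_cell_rderiv_down |]; try lra.
    rewrite tent_right by lra.
    replace ((1 - t) / (1 - s) + lam) with (lam + / (1 - s) + - / (1 - s) * t) by (field; lra).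
    apply kinks_down.
    replace (lam + / (1 - s) + - / (1 - s) * t) with (lam + / (1 - s) * (1 - t)) by ring.
    assert (0 < / (1 - s) * (1 - t) < 1); [split; [nra |] | lra].
    apply (Rmult_lt_reg_l (1 - s)); [lra |].
    replace ((1 - s) * (/ (1 - s) * (1 - t))) with (1 - t) by (field; lra). lra.
Qed.

Lemma cell_solvable_of_profiles : cell_solvable F s profiles_p lam.
Proof.
  apply (cell_solvable_of_profile F s lam profiles_p w_cell); auto.
  - rewrite w_cell_down, w_cell_up by lra. unfold w_down, w_up.
    replace (lam + / (1 - s) + - / (1 - s) * 1) with lam by (field; lra).
    rewrite Rmult_0_r, Rplus_0_r, !height_below; auto. ring.
  - apply w_cell_kinks.
  - exists (rslope PD lam), (rslope PI lam). split; [| split]; [| | exact kink_bottom].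
    + pose proof (w_cell_lderiv_down 1 ltac:(lra)) as H.
      replace (lam + / (1 - s) + - / (1 - s) * 1) with lam in H by (field; lra). exact H.
    + pose proof (w_cell_rderiv_up 0 ltac:(lra)) as H.
      replace (lam + / s * 0) with lam in H by ring. exact H.
Qed.

End TwoProfiles.

Lemma piece_ok_pos B b a z :
  a <= z -> (forall x, is_derive B x (b x)) -> piece_ok (Piece B b a z).
Proof. split; auto. Qed.

Lemma piece_ok_neg B b a z :
  a <= z -> (forall x, is_derive B x (b x)) ->
  piece_ok (Piece (fun y => - B y) (fun y => - b y) a z).
Proof. split; auto. intros x. apply (is_derive_opp B x (b x)). auto. Qed.

Section Setting.
Variables (F : R -> R) (th1 th2 th3 : R) (psi1 psi3 : R -> R).
Hypothesis HF : F_hyp F th1 th2 th3.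
Hypothesis H1 : psi1_spec F psi1 th1.
Hypothesis H3 : psi3_spec F psi3 th2.

Lemma F_continuous x : continuous F x.
Proof. destruct HF as [D _]. exact (ex_derive_continuous F x (D 1%nat x)). Qed.

Lemma F_even x : F (- x) = F x.
Proof. destruct HF as (_ & A & _). auto. Qed.

Lemma th_order : 0 < th3 < th2 /\ th2 < th1.
Proof. destruct HF as (_ & _ & A & B & _). auto. Qed.

Lemma F_values : F 0 = 0 /\ F th2 = 1/2 /\ F th1 = 1/3 /\ F th3 = 1/3.
Proof. destruct HF as (_ & _ & _ & _ & A & B & C & D & _). auto. Qed.

Lemma F_incr_low x y : 0 <= x -> x <= y -> y <= th2 -> F x <= F y.
Proof.
  destruct HF as (_ & _ & _ & _ & _ & _ & _ & _ & _ & A & _).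
  intros. destruct (Req_dec x y); [subst; lra | left; apply A; lra].
Qed.

Lemma F_incr_high x y : th1 <= x -> x <= y -> F x <= F y.
Proof.
  destruct HF as (_ & _ & _ & _ & _ & _ & _ & _ & _ & _ & A & _).
  intros. destruct (Req_dec x y); [subst; lra | left; apply A; lra].
Qed.

Lemma F_decr_mid x y : th2 <= x -> x <= y -> y <= th1 -> F y <= F x.
Proof.
  destruct HF as (_ & _ & _ & _ & _ & _ & _ & _ & _ & _ & _ & A).
  intros. destruct (Req_dec x y); [subst; lra | left; apply A; lra].
Qed.

Lemma F_Rabs q : F q = F (Rabs q).
Proof. unfold Rabs. destruct Rcase_abs; auto. rewrite F_even; auto. Qed.

Definition psi2 (y : R) : R := epsilon (inhabits 0) (fun z => th2 <= z <= th1 /\ F z = y).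

Lemma psi2_spec y : 1/3 <= y <= 1/2 -> th2 <= psi2 y <= th1 /\ F (psi2 y) = y.
Proof.
  intros Hy. apply (epsilon_spec (inhabits 0) (fun z => th2 <= z <= th1 /\ F z = y)).
  destruct th_order. destruct F_values as (_ & E2 & E1 & _).
  destruct (IVT_cor (fun x => F x - y) th2 th1) as [z [Hz1 Hz2]]; [| lra | rewrite E2, E1; nra |].
  - intros x. apply continuity_pt_minus; [apply continuity_pt_filterlim, F_continuous |].
    apply continuity_pt_const. intros ? ?; auto.
  - exists z. split; auto. lra.
Qed.

Lemma F_inj_low x y : 0 <= x <= th2 -> 0 <= y <= th2 -> F x = F y -> x = y.
Proof.
  destruct HF as (_ & _ & _ & _ & _ & _ & _ & _ & _ & A & _).
  intros. destruct (Rtotal_order x y) as [L | [L | L]]; auto; exfalso.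
  - pose proof (A x y). lra.
  - pose proof (A y x). lra.
Qed.

Lemma F_inj_high x y : th1 <= x -> th1 <= y -> F x = F y -> x = y.
Proof.
  destruct HF as (_ & _ & _ & _ & _ & _ & _ & _ & _ & _ & A & _).
  intros. destruct (Rtotal_order x y) as [L | [L | L]]; auto; exfalso.
  - pose proof (A x y). lra.
  - pose proof (A y x). lra.
Qed.

Lemma F_inj_mid x y : th2 <= x <= th1 -> th2 <= y <= th1 -> F x = F y -> x = y.
Proof.
  destruct HF as (_ & _ & _ & _ & _ & _ & _ & _ & _ & _ & _ & A).
  intros. destruct (Rtotal_order x y) as [L | [L | L]]; auto; exfalso.
  - pose proof (A x y). lra.
  - pose proof (A y x). lra.
Qed.

Lemma psi_values : psi3 0 = 0 /\ psi3 (1/3) = th3 /\ psi3 (1/2) = th2 /\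
  psi1 (1/3) = th1 /\ psi2 (1/3) = th1 /\ psi2 (1/2) = th2.
Proof.
  destruct th_order. destruct F_values as (E0 & E2 & E1 & E3).
  destruct (H3 0), (H3 (1/3)), (H3 (1/2)), (H1 (1/3)); try lra.
  destruct (psi2_spec (1/3)), (psi2_spec (1/2)); try lra.
  repeat split; [apply F_inj_low | apply F_inj_low | apply F_inj_low | apply F_inj_high
                | apply F_inj_mid | apply F_inj_mid]; lra.
Qed.

(* Continuous extensions of the branches to all levels, so that their
   primitives are differentiable everywhere. *)
Definition psi1e (y : R) : R := psi1 (Rmax (1/3) y).
Definition psi2e (y : R) : R := psi2 (clamp (1/3) (1/2) y).
Definition psi3e (y : R) : R := psi3 (clamp 0 (1/2) y).

Lemma psi3e_continuous y : continuous psi3e y.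
Proof.
  apply (inverse_clamp_continuous F psi3 0 th2 0 (1/2)); [lra | | intros; apply H3; auto].
  intros x z Hx Hxz Hz. destruct HF as (_ & _ & _ & _ & _ & _ & _ & _ & _ & A & _). apply A; lra.
Qed.

Lemma psi2e_continuous y : continuous psi2e y.
Proof.
  apply (continuous_ext (fun y => - - psi2 (clamp (1/3) (1/2) y))); [intros; apply Ropp_involutive |].
  apply (continuous_opp (fun y => - psi2 (clamp (1/3) (1/2) y))).
  apply (inverse_clamp_continuous (fun x => F (- x)) (fun y => - psi2 y) (- th1) (- th2) (1/3) (1/2)).
  - lra.
  - intros x z Hx Hxz Hz. destruct HF as (_ & _ & _ & _ & _ & _ & _ & _ & _ & _ & _ & A).
    apply A; lra.
  - intros z Hz. destruct (psi2_spec z Hz). rewrite Ropp_involutive. split; [lra | auto].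
Qed.

Lemma psi1e_continuous y : continuous psi1e y.
Proof.
  set (D := Rmax (1/3) y + 1).
  assert (HD : 1/3 <= D) by (unfold D; pose proof (Rmax_l (1/3) y); lra).
  destruct HF as (_ & _ & _ & _ & _ & _ & _ & _ & _ & _ & Hhigh & _).
  apply (continuous_ext_loc _ (fun z => psi1 (clamp (1/3) D z))).
  - exists (mkposreal 1 Rlt_0_1). intros z Hz.
    unfold ball in Hz; simpl in Hz; unfold AbsRing_ball, abs, minus, plus, opp in Hz; simpl in Hz.
    apply Rabs_lt_between in Hz.
    unfold psi1e, clamp. f_equal. unfold D, Rmax, Rmin in *. repeat destruct Rle_dec; lra.
  - apply (inverse_clamp_continuous F psi1 th1 (psi1 D) (1/3) D); auto.
    intros z Hz. destruct (H1 z) as [A B]; [lra |]. split; [split |]; auto.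
    destruct (Req_dec z D); [subst; lra |].
    destruct (H1 D) as [A' B']; auto.
    destruct (Rle_dec (psi1 z) (psi1 D)) as [| Hn]; auto.
    pose proof (Hhigh (psi1 D) (psi1 z) A' ltac:(lra)). lra.
Qed.

Lemma psi1e_spec y : th1 <= psi1e y /\ F (psi1e y) = Rmax (1/3) y.
Proof. apply H1, Rmax_l. Qed.

Lemma psi2e_spec y : th2 <= psi2e y <= th1 /\ F (psi2e y) = clamp (1/3) (1/2) y.
Proof. apply psi2_spec, clamp_in; lra. Qed.

Lemma psi3e_spec y : 0 <= psi3e y <= th2 /\ F (psi3e y) = clamp 0 (1/2) y.
Proof. apply H3, clamp_in; lra. Qed.

Lemma psi1e_eq y : 1/3 <= y -> psi1e y = psi1 y.
Proof. intros. unfold psi1e. rewrite Rmax_right; auto. Qed.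

Lemma psi2e_eq y : 1/3 <= y <= 1/2 -> psi2e y = psi2 y.
Proof. intros. unfold psi2e. rewrite clamp_id; auto; lra. Qed.

Lemma psi3e_eq y : 0 <= y <= 1/2 -> psi3e y = psi3 y.
Proof. intros. unfold psi3e. rewrite clamp_id; auto; lra. Qed.

Lemma F_psi1e l : 1/3 <= l -> F (psi1e l) = l.
Proof. intros. rewrite (proj2 (psi1e_spec l)), Rmax_right; lra. Qed.

Lemma F_psi2e l : 1/3 <= l <= 1/2 -> F (psi2e l) = l.
Proof. intros. rewrite (proj2 (psi2e_spec l)), clamp_id; lra. Qed.

Lemma F_psi3e l : 0 <= l <= 1/2 -> F (psi3e l) = l.
Proof. intros. rewrite (proj2 (psi3e_spec l)), clamp_id; lra. Qed.

Lemma psi1e_le x y : x <= y -> psi1e x <= psi1e y.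
Proof.
  intros Hxy. destruct (psi1e_spec x) as [A B], (psi1e_spec y) as [C D].
  destruct (Rle_dec (psi1e x) (psi1e y)) as [| Hn]; auto. exfalso.
  destruct HF as (_ & _ & _ & _ & _ & _ & _ & _ & _ & _ & Hhigh & _).
  pose proof (Hhigh (psi1e y) (psi1e x) C ltac:(lra)).
  unfold Rmax in *. repeat destruct Rle_dec; lra.
Qed.

Lemma psie_values : psi3e 0 = 0 /\ psi3e (1/3) = th3 /\ psi3e (1/2) = th2 /\
  psi1e (1/3) = th1 /\ psi2e (1/3) = th1 /\ psi2e (1/2) = th2.
Proof.
  rewrite psi3e_eq, psi3e_eq, psi3e_eq, psi1e_eq, psi2e_eq, psi2e_eq; try lra.
  apply psi_values.
Qed.

Definition Psi1 : R -> R := prim psi1e.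
Definition Psi2 : R -> R := prim psi2e.
Definition Psi3 : R -> R := prim psi3e.

Lemma is_derive_Psi1 x : is_derive Psi1 x (psi1e x).
Proof. apply is_derive_prim, psi1e_continuous. Qed.

Lemma is_derive_Psi2 x : is_derive Psi2 x (psi2e x).
Proof. apply is_derive_prim, psi2e_continuous. Qed.

Lemma is_derive_Psi3 x : is_derive Psi3 x (psi3e x).
Proof. apply is_derive_prim, psi3e_continuous. Qed.

Lemma RInt_psi1 a z : 1/3 <= a -> 1/3 <= z -> RInt psi1 a z = Psi1 z - Psi1 a.
Proof.
  intros. unfold Psi1. rewrite <- (RInt_prim psi1e psi1e_continuous). apply RInt_ext.
  intros x Hx. rewrite psi1e_eq; auto. pose proof (Rmin_glb a z (1/3)). lra.
Qed.

Lemma RInt_psi3 a z : 0 <= a <= 1/2 -> 0 <= z <= 1/2 -> RInt psi3 a z = Psi3 z - Psi3 a.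
Proof.
  intros. unfold Psi3. rewrite <- (RInt_prim psi3e psi3e_continuous). apply RInt_ext.
  intros x Hx. rewrite psi3e_eq; auto.
  pose proof (Rmin_glb a z 0). pose proof (Rmax_lub a z (1/2)). lra.
Qed.

Lemma RInt_mix s : RInt (mix s psi1 psi3) (1/3) (1/2) =
  s * (Psi1 (1/2) - Psi1 (1/3)) + (1 - s) * (Psi3 (1/2) - Psi3 (1/3)).
Proof.
  assert (Hc : forall x, continuous (fun y => s * psi1e y + (1 - s) * psi3e y) x).
  { intros x. apply (continuous_plus (fun y => s * psi1e y) (fun y => (1 - s) * psi3e y)).
    - apply (continuous_scal_r s psi1e), psi1e_continuous.
    - apply (continuous_scal_r (1 - s) psi3e), psi3e_continuous. }
  transitivity (RInt (fun y => s * psi1e y + (1 - s) * psi3e y) (1/3) (1/2)).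
  - apply RInt_ext. intros x Hx. rewrite Rmin_left, Rmax_right in Hx by lra.
    unfold mix. rewrite psi1e_eq, psi3e_eq; lra.
  - rewrite (RInt_antideriv _ (fun y => s * Psi1 y + (1 - s) * Psi3 y)); [| | exact Hc].
    + (* The equation is stated in Coquelicot's module of [RInt]; [ring] needs it in [R]. *)
      match goal with |- ?a = ?b => change (@eq R a b) end. ring.
    + intros x. apply (is_derive_plus (fun y => s * Psi1 y) (fun y => (1 - s) * Psi3 y)).
      * apply (is_derive_scal Psi1), is_derive_Psi1.
      * apply (is_derive_scal Psi3), is_derive_Psi3.
Qed.

Lemma Psi1_incr_lb a z : a <= z -> psi1e a * (z - a) <= Psi1 z - Psi1 a.
Proof.
  intros. apply prim_incr_lb; auto; [apply psi1e_continuous |]. intros; apply psi1e_le; lra.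
Qed.

Lemma Psi1_incr_lb_th1 a z : a <= z -> th1 * (z - a) <= Psi1 z - Psi1 a.
Proof.
  intros. eapply Rle_trans; [| apply Psi1_incr_lb; auto].
  apply Rmult_le_compat_r; [lra | apply psi1e_spec].
Qed.

Lemma Psi3_incr_bounds a z : a <= z -> 0 <= Psi3 z - Psi3 a <= th2 * (z - a).
Proof.
  intros. split.
  - replace 0 with (0 * (z - a)) by ring.
    apply prim_incr_lb; auto; [apply psi3e_continuous | intros; apply psi3e_spec].
  - apply prim_incr_ub; auto; [apply psi3e_continuous | intros; apply psi3e_spec].
Qed.

Lemma F_le_below_psi3 u q : 0 <= u <= 1/2 -> Rabs q <= psi3e u -> F q <= u.
Proof.
  intros Hu Hq. rewrite F_Rabs, <- (F_psi3e u Hu).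
  apply F_incr_low; [apply Rabs_pos | auto | apply psi3e_spec].
Qed.

Lemma F_le_below_psi1 t q : 1/2 <= t -> Rabs q <= psi1e t -> F q <= t.
Proof.
  intros Ht Hq. rewrite F_Rabs. destruct th_order. destruct F_values as (_ & E2 & _).
  pose proof (Rabs_pos q). pose proof (psi1e_spec t) as [A _].
  destruct (Rle_dec (Rabs q) th2); [| destruct (Rle_dec (Rabs q) th1)].
  - apply Rle_trans with (F th2); [apply F_incr_low |]; lra.
  - apply Rle_trans with (F th2); [apply F_decr_mid |]; lra.
  - rewrite <- (F_psi1e t) by lra. apply F_incr_high; lra.
Qed.

Lemma F_ge_between_psi3_psi2 u q : 1/3 <= u <= 1/2 -> psi3e u <= Rabs q <= psi2e u -> u <= F q.
Proof.
  intros Hu Hq. pose proof (psi3e_spec u) as [A _]. pose proof (psi2e_spec u) as [C _].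
  rewrite F_Rabs. destruct (Rle_dec (Rabs q) th2).
  - rewrite <- (F_psi3e u) at 1 by lra. apply F_incr_low; lra.
  - rewrite <- (F_psi2e u) at 1 by lra. apply F_decr_mid; lra.
Qed.

Lemma F_le_between_psi2_psi1 u q : 1/3 <= u <= 1/2 -> psi2e u <= Rabs q <= psi1e u -> F q <= u.
Proof.
  intros Hu Hq. pose proof (psi1e_spec u) as [A _]. pose proof (psi2e_spec u) as [C _].
  rewrite F_Rabs. destruct (Rle_dec (Rabs q) th1).
  - rewrite <- (F_psi2e u) by lra. apply F_decr_mid; lra.
  - rewrite <- (F_psi1e u) by lra. apply F_incr_high; lra.
Qed.

Lemma F_ge_between_th3_th1 q : th3 <= Rabs q <= th1 -> 1/3 <= F q.
Proof.
  intros Hq. rewrite F_Rabs. destruct th_order. destruct F_values as (_ & _ & E1 & E3).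
  destruct (Rle_dec (Rabs q) th2).
  - rewrite <- E3. apply F_incr_low; lra.
  - rewrite <- E1. apply F_decr_mid; lra.
Qed.

(** * Explicit cell solutions *)

Lemma psi3e_lt_psi1e l : psi3e l < psi1e l.
Proof. pose proof (psi3e_spec l). pose proof (psi1e_spec l). destruct th_order. lra. Qed.

Lemma psi2e_le_psi1e l : psi2e l <= psi1e l.
Proof. pose proof (psi2e_spec l). pose proof (psi1e_spec l). lra. Qed.

Lemma psi1e_pos l : 0 < psi1e l.
Proof. pose proof (psi1e_spec l). destruct th_order. lra. Qed.

Lemma psi3e_pos l : 0 < l <= 1/2 -> 0 < psi3e l.
Proof.
  intros. pose proof (psi3e_spec l) as [A _]. destruct (Req_dec (psi3e l) 0) as [E | E]; [| lra].
  pose proof (F_psi3e l ltac:(lra)). rewrite E, (proj1 F_values) in H0. lra.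
Qed.

Ltac smooth_kink :=
  apply kink_admissible_smooth; rewrite ?F_even;
  first [apply F_psi1e | apply F_psi2e | apply F_psi3e]; lra.

Lemma kink_p3_p1 : kink_admissible F th3 th1 (1/3).
Proof.
  destruct th_order. apply kink_admissible_convex; [lra |].
  intros q Hq. apply F_ge_between_th3_th1. rewrite Rabs_pos_eq; lra.
Qed.

Lemma kink_n1_n3 : kink_admissible F (- th1) (- th3) (1/3).
Proof.
  destruct th_order. apply kink_admissible_convex; [lra |].
  intros q Hq. apply F_ge_between_th3_th1. rewrite Rabs_left; lra.
Qed.

Lemma kink_p1_down t b : 1/2 <= t -> - psi1e t <= b < psi1e t -> kink_admissible F (psi1e t) b t.
Proof.
  intros Ht Hb. apply kink_admissible_concave; [lra |].
  intros q Hq. apply F_le_below_psi1; [lra |]. apply Rabs_le; lra.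
Qed.

Lemma kink_p3_n3 u : 0 < u <= 1/2 -> kink_admissible F (psi3e u) (- psi3e u) u.
Proof.
  intros Hu. pose proof (psi3e_pos u Hu). apply kink_admissible_concave; [lra |].
  intros q Hq. apply F_le_below_psi3; [lra |]. apply Rabs_le; lra.
Qed.

Lemma kink_n2_n3 u : 1/3 <= u <= 1/2 -> kink_admissible F (- psi2e u) (- psi3e u) u.
Proof.
  intros Hu. pose proof (psi3e_spec u) as [A _]. pose proof (psi2e_spec u) as [C _].
  destruct (Rle_dec (psi2e u) (psi3e u)).
  - replace (psi2e u) with (psi3e u) by lra. smooth_kink.
  - apply kink_admissible_convex; [lra |].
    intros q Hq. apply F_ge_between_psi3_psi2; [lra |]. rewrite Rabs_left1; lra.
Qed.

Lemma kink_n2_n1 u : 1/3 <= u <= 1/2 -> kink_admissible F (- psi2e u) (- psi1e u) u.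
Proof.
  intros Hu. pose proof (psi2e_le_psi1e u). pose proof (psi2e_spec u) as [C _]. destruct th_order.
  destruct (Req_dec (psi1e u) (psi2e u)) as [E | E].
  - rewrite E. smooth_kink.
  - apply kink_admissible_concave; [lra |].
    intros q Hq. apply F_le_between_psi2_psi1; [lra |]. rewrite Rabs_left1; lra.
Qed.

Lemma kink_p3_p2 u : 1/3 <= u <= 1/2 -> kink_admissible F (psi3e u) (psi2e u) u.
Proof.
  intros Hu. pose proof (psi3e_spec u) as [A _]. pose proof (psi2e_spec u) as [C _].
  destruct (Rle_dec (psi2e u) (psi3e u)).
  - replace (psi2e u) with (psi3e u) by lra. smooth_kink.
  - apply kink_admissible_convex; [lra |].
    intros q Hq. apply F_ge_between_psi3_psi2; [lra |]. rewrite Rabs_pos_eq; lra.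
Qed.

Lemma kink_p1_p2 u : 1/3 <= u <= 1/2 -> kink_admissible F (psi1e u) (psi2e u) u.
Proof.
  intros Hu. pose proof (psi2e_le_psi1e u). pose proof (psi2e_spec u) as [C _]. destruct th_order.
  destruct (Req_dec (psi1e u) (psi2e u)) as [E | E].
  - rewrite E. smooth_kink.
  - apply kink_admissible_concave; [lra |].
    intros q Hq. apply F_le_between_psi2_psi1; [lra |]. rewrite Rabs_pos_eq; lra.
Qed.

Definition pos1 a z := Piece Psi1 psi1e a z.
Definition pos2 a z := Piece Psi2 psi2e a z.
Definition pos3 a z := Piece Psi3 psi3e a z.
Definition neg1 a z := Piece (fun y => - Psi1 y) (fun y => - psi1e y) a z.
Definition neg2 a z := Piece (fun y => - Psi2 y) (fun y => - psi2e y) a z.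
Definition neg3 a z := Piece (fun y => - Psi3 y) (fun y => - psi3e y) a z.

Ltac eval_slopes :=
  unfold pos1, pos2, pos3, neg1, neg2, neg3; cbn [rslope lslope];
  unfold piece_rslope, piece_lslope; cbn [pc_lo pc_hi pc_slope]; cbv beta;
  repeat match goal with
  | |- context [if Rle_dec ?x ?y then _ else _] => destruct (Rle_dec x y); try (exfalso; lra)
  | |- context [if Rlt_dec ?x ?y then _ else _] => destruct (Rlt_dec x y); try (exfalso; lra)
  end; rewrite ?Rplus_0_l, ?Rplus_0_r.

Definition up_a := [pos3 0 (1/3); pos1 (1/3) 1].
Definition down_a t1 t2 t3 t4 := [neg3 0 t4; neg1 t4 t3; neg2 t3 t2; pos3 t2 t1; pos1 t1 1].

Lemma kinks_up_a l : 0 < l < 0 + 1 -> kink_admissible F (lslope up_a l) (rslope up_a l) l.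
Proof.
  intros Hl. unfold up_a. destruct psie_values as (_ & A13 & _ & B13 & _).
  destruct (Rtotal_order l (1/3)) as [h | [h | h]]; eval_slopes.
  - smooth_kink.
  - subst l. rewrite A13, B13. apply kink_p3_p1.
  - smooth_kink.
Qed.

Lemma kinks_down_a1 u : 0 <= u <= 1/2 -> forall l, 0 < l < 0 + 1 ->
  kink_admissible F (rslope (down_a (1/2) u u u) l) (lslope (down_a (1/2) u u u) l) l.
Proof.
  intros Hu l Hl. unfold down_a.
  pose proof (psi3e_spec l). pose proof (psi3e_lt_psi1e l). pose proof (psi1e_pos l).
  destruct (Rtotal_order l u) as [h | [h | h]].
  - eval_slopes. smooth_kink.
  - subst l. destruct (Req_dec u (1/2)) as [-> | E].
    + eval_slopes. apply kink_p1_down; lra.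
    + eval_slopes. apply kink_p3_n3; lra.
  - destruct (Rtotal_order l (1/2)) as [h2 | [-> | h2]]; eval_slopes.
    + smooth_kink.
    + apply kink_p1_down; lra.
    + smooth_kink.
Qed.

Lemma kinks_down_a2 u : 1/3 <= u <= 1/2 -> forall l, 0 < l < 0 + 1 ->
  kink_admissible F (rslope (down_a (1/2) (1/2) u u) l) (lslope (down_a (1/2) (1/2) u u) l) l.
Proof.
  intros Hu l Hl. unfold down_a.
  pose proof (psi2e_spec l). pose proof (psi2e_le_psi1e l). pose proof (psi1e_pos l).
  pose proof (psi3e_spec l). pose proof (psi3e_lt_psi1e l). destruct th_order.
  destruct (Rtotal_order l u) as [h | [h | h]].
  - eval_slopes. smooth_kink.
  - subst l. destruct (Req_dec u (1/2)) as [-> | E].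
    + eval_slopes. apply kink_p1_down; lra.
    + eval_slopes. apply kink_n2_n3; lra.
  - destruct (Rtotal_order l (1/2)) as [h2 | [-> | h2]]; eval_slopes.
    + smooth_kink.
    + apply kink_p1_down; lra.
    + smooth_kink.
Qed.

Lemma kinks_down_a3 u : 1/3 <= u <= 1/2 -> forall l, 0 < l < 0 + 1 ->
  kink_admissible F (rslope (down_a (1/2) (1/2) u (1/3)) l) (lslope (down_a (1/2) (1/2) u (1/3)) l) l.
Proof.
  intros Hu l Hl. unfold down_a.
  pose proof (psi2e_spec l). pose proof (psi2e_le_psi1e l). pose proof (psi1e_pos l).
  pose proof (psi3e_spec l). pose proof (psi3e_lt_psi1e l).
  destruct th_order. destruct psie_values as (_ & A13 & _ & B13 & D13 & _).
  destruct (Rtotal_order l (1/3)) as [h | [h | h]].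
  - eval_slopes. smooth_kink.
  - subst l. destruct (Req_dec u (1/3)) as [-> | E].
    + eval_slopes. rewrite A13, D13. apply kink_n1_n3.
    + eval_slopes. rewrite A13, B13. apply kink_n1_n3.
  - destruct (Rtotal_order l u) as [h1 | [h1 | h1]].
    + eval_slopes. smooth_kink.
    + subst l. destruct (Req_dec u (1/2)) as [-> | E].
      * eval_slopes. apply kink_p1_down; lra.
      * eval_slopes. apply kink_n2_n1; lra.
    + destruct (Rtotal_order l (1/2)) as [h2 | [-> | h2]]; eval_slopes.
      * smooth_kink.
      * apply kink_p1_down; lra.
      * smooth_kink.
Qed.

Lemma kinks_down_a4 t : 1/2 <= t <= 1 -> forall l, 0 < l < 0 + 1 ->
  kink_admissible F (rslope (down_a t t t (1/3)) l) (lslope (down_a t t t (1/3)) l) l.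
Proof.
  intros Ht l Hl. unfold down_a. pose proof (psi1e_pos l).
  destruct psie_values as (_ & A13 & _ & B13 & _).
  destruct (Rtotal_order l (1/3)) as [h | [h | h]].
  - eval_slopes. smooth_kink.
  - subst l. eval_slopes. rewrite A13, B13. apply kink_n1_n3.
  - destruct (Rtotal_order l t) as [h1 | [-> | h1]]; eval_slopes.
    + smooth_kink.
    + apply kink_p1_down; lra.
    + smooth_kink.
Qed.

(* Four one-parameter families of downhill profiles, glued end to end; they
   join the profile of [p_plus] ([u = 0] in the first one) to the profile with
   slopes [- psi3] below [1/3] and [- psi1] above ([t = 1] in the last one). *)
Definition family_a t1 t2 t3 t4 : Prop :=
  (t1 = 1/2 /\ t2 = t4 /\ t3 = t4 /\ 0 <= t4 <= 1/2) \/
  (t1 = 1/2 /\ t2 = 1/2 /\ t3 = t4 /\ 1/3 <= t4 <= 1/2) \/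
  (t1 = 1/2 /\ t2 = 1/2 /\ 1/3 <= t3 <= 1/2 /\ t4 = 1/3) \/
  (t2 = t1 /\ t3 = t1 /\ 1/2 <= t1 <= 1 /\ t4 = 1/3).

Lemma family_a_order t1 t2 t3 t4 :
  family_a t1 t2 t3 t4 -> 0 <= t4 <= t3 /\ t3 <= t2 /\ t2 <= t1 /\ t1 <= 1.
Proof. intros [(-> & -> & -> & H) | [(-> & -> & -> & H) | [(-> & -> & H & ->) | (-> & -> & H & ->)]]]; lra. Qed.

Lemma kinks_down_family_a t1 t2 t3 t4 : family_a t1 t2 t3 t4 -> forall l, 0 < l < 0 + 1 ->
  kink_admissible F (rslope (down_a t1 t2 t3 t4) l) (lslope (down_a t1 t2 t3 t4) l) l.
Proof.
  intros [(-> & -> & -> & H) | [(-> & -> & -> & H) | [(-> & -> & H & ->) | (-> & -> & H & ->)]]].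
  - apply kinks_down_a1; auto.
  - apply kinks_down_a2; auto.
  - apply kinks_down_a3; auto.
  - apply kinks_down_a4; auto.
Qed.

Lemma kink_top_a t1 t2 t3 t4 : family_a t1 t2 t3 t4 ->
  kink_admissible F (lslope up_a (0 + 1)) (lslope (down_a t1 t2 t3 t4) (0 + 1)) (0 + 1).
Proof.
  intros Hf. replace (0 + 1) with 1 by ring. pose proof (psi1e_pos 1).
  destruct (family_a_order _ _ _ _ Hf) as (O1 & O2 & O3 & O4).
  unfold up_a, down_a. destruct (Req_dec t1 1) as [-> | E1].
  - assert (t2 = 1 /\ t3 = 1 /\ t4 = 1/3) as (-> & -> & ->)
      by (destruct Hf as [(? & ? & ? & ?) | [(? & ? & ? & ?) | [(? & ? & ? & ?) | (? & ? & ? & ?)]]]; lra).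
    eval_slopes. apply kink_p1_down; lra.
  - eval_slopes. smooth_kink.
Qed.

Lemma kink_bottom_a t1 t2 t3 t4 : family_a t1 t2 t3 t4 ->
  kink_admissible F (rslope (down_a t1 t2 t3 t4) 0) (rslope up_a 0) 0.
Proof.
  intros Hf. destruct (family_a_order _ _ _ _ Hf) as (O1 & O2 & O3 & O4).
  destruct psie_values as (A0 & _). pose proof (proj1 F_values).
  unfold up_a, down_a. destruct (Req_dec t4 0) as [-> | E4].
  - assert (t3 = 0 /\ t2 = 0 /\ t1 = 1/2) as (-> & -> & ->)
      by (destruct Hf as [(? & ? & ? & ?) | [(? & ? & ? & ?) | [(? & ? & ? & ?) | (? & ? & ? & ?)]]]; lra).
    eval_slopes. rewrite A0. apply kink_admissible_smooth; auto.
  - eval_slopes. rewrite A0, Ropp_0. apply kink_admissible_smooth; auto.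
Qed.

Definition up_b lam := [pos3 lam (1/3); pos1 (1/3) (lam + 1)].
Definition down_b lam := [pos3 lam (1/2); pos1 (1/2) (lam + 1)].

Lemma kinks_b lam : 0 <= lam <= 1/3 ->
  (forall l, lam < l < lam + 1 -> kink_admissible F (lslope (up_b lam) l) (rslope (up_b lam) l) l) /\
  (forall l, lam < l < lam + 1 -> kink_admissible F (rslope (down_b lam) l) (lslope (down_b lam) l) l) /\
  kink_admissible F (lslope (up_b lam) (lam + 1)) (lslope (down_b lam) (lam + 1)) (lam + 1) /\
  kink_admissible F (rslope (down_b lam) lam) (rslope (up_b lam) lam) lam.
Proof.
  intros Hl. destruct psie_values as (_ & A13 & _ & B13 & _).
  unfold up_b, down_b. split; [| split; [| split]].
  - intros l H. destruct (Rtotal_order l (1/3)) as [h | [-> | h]]; eval_slopes.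
    + smooth_kink.
    + rewrite A13, B13. apply kink_p3_p1.
    + smooth_kink.
  - intros l H. pose proof (psi3e_spec l). pose proof (psi3e_lt_psi1e l).
    destruct (Rtotal_order l (1/2)) as [h | [-> | h]]; eval_slopes.
    + smooth_kink.
    + apply kink_p1_down; lra.
    + smooth_kink.
  - eval_slopes. smooth_kink.
  - destruct (Req_dec lam (1/3)) as [-> | E]; eval_slopes.
    + rewrite A13, B13. apply kink_p3_p1.
    + smooth_kink.
Qed.

Definition up_c := [pos1 (1/3) (1/3 + 1)].
Definition down_c u2 u1 := [pos2 (1/3) u2; pos3 u2 u1; pos1 u1 (1/3 + 1)].

(* Two families glued at [u2 = u1 = 1/2]; [u2 = 1/3] gives [q_minus] in the
   first and [q_plus] in the second. *)
Definition family_c (u2 u1 : R) : Prop :=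
  (u1 = 1/2 /\ 1/3 <= u2 <= 1/2) \/ (u1 = u2 /\ 1/3 <= u2 <= 1/2).

Lemma kinks_down_c u2 u1 : family_c u2 u1 -> forall l, 1/3 < l < 1/3 + 1 ->
  kink_admissible F (rslope (down_c u2 u1) l) (lslope (down_c u2 u1) l) l.
Proof.
  intros Hf l H. unfold down_c.
  pose proof (psi3e_spec l). pose proof (psi3e_lt_psi1e l). pose proof (psi2e_spec l).
  pose proof (psi1e_spec l). destruct psie_values as (_ & _ & _ & _ & _ & D12).
  destruct th_order. destruct Hf as [(-> & Hu) | (-> & Hu)].
  - destruct (Rtotal_order l u2) as [h | [-> | h]].
    + eval_slopes. smooth_kink.
    + destruct (Req_dec u2 (1/2)) as [-> | E]; eval_slopes.
      * apply kink_p1_down; lra.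
      * apply kink_p3_p2; lra.
    + destruct (Rtotal_order l (1/2)) as [h2 | [-> | h2]]; eval_slopes.
      * smooth_kink.
      * apply kink_p1_down; lra.
      * smooth_kink.
  - destruct (Rtotal_order l u2) as [h | [-> | h]]; eval_slopes.
    + smooth_kink.
    + apply kink_p1_p2; lra.
    + smooth_kink.
Qed.

Lemma kinks_c u2 u1 : family_c u2 u1 ->
  (forall l, 1/3 < l < 1/3 + 1 -> kink_admissible F (lslope up_c l) (rslope up_c l) l) /\
  (forall l, 1/3 < l < 1/3 + 1 ->
     kink_admissible F (rslope (down_c u2 u1) l) (lslope (down_c u2 u1) l) l) /\
  kink_admissible F (lslope up_c (1/3 + 1)) (lslope (down_c u2 u1) (1/3 + 1)) (1/3 + 1) /\
  kink_admissible F (rslope (down_c u2 u1) (1/3)) (rslope up_c (1/3)) (1/3).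
Proof.
  intros Hf. destruct psie_values as (_ & A13 & _ & B13 & D13 & _).
  pose proof (F_values) as (_ & _ & E1 & _).
  assert (Hb : 1/3 <= u2 <= u1 /\ u1 <= 1/2) by (destruct Hf as [(-> & Hu) | (-> & Hu)]; lra).
  unfold up_c. split; [| split; [| split]].
  - intros l H. eval_slopes. smooth_kink.
  - apply kinks_down_c; auto.
  - unfold down_c. eval_slopes. smooth_kink.
  - unfold down_c. destruct Hf as [(-> & Hu) | (-> & Hu)];
      destruct (Req_dec u2 (1/3)) as [-> | E]; eval_slopes.
    + rewrite A13, B13. apply kink_p3_p1.
    + rewrite D13, B13. apply kink_admissible_smooth; auto.
    + smooth_kink.
    + rewrite D13, B13. apply kink_admissible_smooth; auto.
Qed.

Definition prof_d lam := [pos1 lam (lam + 1)].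

Lemma kinks_d lam : 1/3 <= lam ->
  (forall l, lam < l < lam + 1 -> kink_admissible F (lslope (prof_d lam) l) (rslope (prof_d lam) l) l) /\
  (forall l, lam < l < lam + 1 -> kink_admissible F (rslope (prof_d lam) l) (lslope (prof_d lam) l) l) /\
  kink_admissible F (lslope (prof_d lam) (lam + 1)) (lslope (prof_d lam) (lam + 1)) (lam + 1) /\
  kink_admissible F (rslope (prof_d lam) lam) (rslope (prof_d lam) lam) lam.
Proof.
  intros Hl. unfold prof_d. split; [| split; [| split]]; intros; eval_slopes; smooth_kink.
Qed.

Lemma ex_derive_Psi1 x : ex_derive Psi1 x.
Proof. eexists; apply is_derive_Psi1. Qed.

Lemma ex_derive_Psi2 x : ex_derive Psi2 x.
Proof. eexists; apply is_derive_Psi2. Qed.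

Lemma ex_derive_Psi3 x : ex_derive Psi3 x.
Proof. eexists; apply is_derive_Psi3. Qed.

Ltac unfold_pieces := unfold pos1, pos2, pos3, neg1, neg2, neg3.

Ltac pieces_ok :=
  repeat (apply List.Forall_cons;
    [ unfold_pieces; first [apply piece_ok_neg | apply piece_ok_pos];
      [lra | first [apply is_derive_Psi1 | apply is_derive_Psi2 | apply is_derive_Psi3]] | ]);
  apply List.Forall_nil.

Ltac pieces_within :=
  repeat (apply List.Forall_cons; [unfold_pieces; cbn [pc_lo pc_hi]; lra |]);
  apply List.Forall_nil.

Ltac total_height :=
  unfold profiles_p; rewrite !height_above by pieces_within;
  unfold_pieces; cbn [fold_right pc_prim pc_lo pc_hi].

Ltac continuity_in_parameter :=
  intros x; apply (@ex_derive_continuous R_AbsRing R_NormedModule); auto_derive;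
  repeat split; try apply ex_derive_Psi1; try apply ex_derive_Psi2; try apply ex_derive_Psi3.

Section Cells.
Variable s : R.
Hypothesis Hs : 0 < s < 1.

Definition p_a t1 t2 t3 t4 := s * (Psi3 (1/3) - Psi3 0 + (Psi1 1 - Psi1 (1/3))) +
  (1 - s) * (- (Psi3 t4 - Psi3 0) - (Psi1 t3 - Psi1 t4) - (Psi2 t2 - Psi2 t3) +
             (Psi3 t1 - Psi3 t2) + (Psi1 1 - Psi1 t1)).

Lemma cell_a t1 t2 t3 t4 : family_a t1 t2 t3 t4 -> cell_solvable F s (p_a t1 t2 t3 t4) 0.
Proof.
  intros Hf. destruct (family_a_order _ _ _ _ Hf) as (O1 & O2 & O3 & O4).
  replace (p_a t1 t2 t3 t4) with (profiles_p s 0 up_a (down_a t1 t2 t3 t4)).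
  2: { unfold up_a, down_a. total_height. unfold p_a. replace (0 + 1) with 1 by ring. ring. }
  apply cell_solvable_of_profiles;
    [exact Hs | | | | | apply kinks_up_a | apply kinks_down_family_a | apply kink_top_a
    | apply kink_bottom_a]; auto; unfold up_a, down_a;
  first [pieces_ok | pieces_within].
Qed.

Definition p_b lam := s * (Psi3 (1/3) - Psi3 lam + (Psi1 (lam + 1) - Psi1 (1/3))) +
  (1 - s) * (Psi3 (1/2) - Psi3 lam + (Psi1 (lam + 1) - Psi1 (1/2))).

Lemma cell_b lam : 0 <= lam <= 1/3 -> cell_solvable F s (p_b lam) lam.
Proof.
  intros Hl. destruct (kinks_b lam Hl) as (Ku & Kd & Kt & Kb).
  replace (p_b lam) with (profiles_p s lam (up_b lam) (down_b lam)).
  2: { unfold up_b, down_b. total_height. unfold p_b. ring. }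
  apply cell_solvable_of_profiles; auto; unfold up_b, down_b; first [pieces_ok | pieces_within].
Qed.

Definition p_c u2 u1 := s * (Psi1 (1/3 + 1) - Psi1 (1/3)) +
  (1 - s) * (Psi2 u2 - Psi2 (1/3) + (Psi3 u1 - Psi3 u2) + (Psi1 (1/3 + 1) - Psi1 u1)).

Lemma cell_c u2 u1 : family_c u2 u1 -> cell_solvable F s (p_c u2 u1) (1/3).
Proof.
  intros Hf. destruct (kinks_c u2 u1 Hf) as (Ku & Kd & Kt & Kb).
  assert (Hb : 1/3 <= u2 <= u1 /\ u1 <= 1/2) by (destruct Hf as [(-> & Hu) | (-> & Hu)]; lra).
  replace (p_c u2 u1) with (profiles_p s (1/3) up_c (down_c u2 u1)).
  2: { unfold up_c, down_c. total_height. unfold p_c. ring. }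
  apply cell_solvable_of_profiles; auto; unfold up_c, down_c; first [pieces_ok | pieces_within].
Qed.

Lemma cell_d lam : 1/3 <= lam -> cell_solvable F s (Psi1 (lam + 1) - Psi1 lam) lam.
Proof.
  intros Hl. destruct (kinks_d lam Hl) as (Ku & Kd & Kt & Kb).
  replace (Psi1 (lam + 1) - Psi1 lam) with (profiles_p s lam (prof_d lam) (prof_d lam)).
  2: { unfold prof_d. total_height. ring. }
  apply cell_solvable_of_profiles; auto; unfold prof_d; first [pieces_ok | pieces_within].
Qed.

Lemma p_a_sweep p : p_a 1 1 1 (1/3) <= p <= p_a (1/2) 0 0 0 -> cell_solvable F s p 0.
Proof.
  intros Hp.
  set (fA := fun u => p_a (1/2) u u u). set (fA' := fun u => p_a (1/2) (1/2) u u).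
  set (fB := fun u => p_a (1/2) (1/2) u (1/3)). set (fC := fun u => p_a u u u (1/3)).
  assert (CA : forall x, continuous fA x) by (unfold fA, p_a; continuity_in_parameter).
  assert (CA' : forall x, continuous fA' x) by (unfold fA', p_a; continuity_in_parameter).
  assert (CB : forall x, continuous fB x) by (unfold fB, p_a; continuity_in_parameter).
  assert (CC : forall x, continuous fC x) by (unfold fC, p_a; continuity_in_parameter).
  assert (H04 : (fA 0 - p) * (fC 1 - p) <= 0) by (unfold fA, fC; nra).
  destruct (sign_change_split _ (fC (1/2) - p) _ H04) as [K | K].
  - destruct (sign_change_split _ (fB (1/3) - p) _ K) as [K2 | K2].
    + destruct (sign_change_split _ (fA (1/2) - p) _ K2) as [K3 | K3].
      * destruct (IVT_value fA 0 (1/2) p CA ltac:(lra) K3) as [u [Hu <-]].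
        apply cell_a. left. repeat split; lra.
      * change (fA (1/2)) with (fA' (1/2)) in K3. change (fB (1/3)) with (fA' (1/3)) in K3.
        rewrite Rmult_comm in K3.
        destruct (IVT_value fA' (1/3) (1/2) p CA' ltac:(lra) K3) as [u [Hu <-]].
        apply cell_a. right; left. repeat split; lra.
    + change (fC (1/2)) with (fB (1/2)) in K2.
      destruct (IVT_value fB (1/3) (1/2) p CB ltac:(lra) K2) as [u [Hu <-]].
      apply cell_a. right; right; left. repeat split; lra.
  - destruct (IVT_value fC (1/2) 1 p CC ltac:(lra) K) as [u [Hu <-]].
    apply cell_a. right; right; right. repeat split; lra.
Qed.

Lemma p_b_sweep p : p_b 0 <= p <= p_b (1/3) \/ p_b (1/3) <= p <= p_b 0 ->
  exists lam, 0 <= lam <= 1/3 /\ p_b lam = p.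
Proof.
  intros Hp. apply IVT_value; [unfold p_b; continuity_in_parameter | lra | destruct Hp; nra].
Qed.

Lemma p_c_sweep p : p_c (1/3) (1/2) <= p <= p_c (1/3) (1/3) ->
  exists u2 u1, family_c u2 u1 /\ p_c u2 u1 = p.
Proof.
  intros Hp. set (fX := fun u => p_c u (1/2)). set (fY := fun u => p_c u u).
  assert (CX : forall x, continuous fX x) by (unfold fX, p_c; continuity_in_parameter).
  assert (CY : forall x, continuous fY x) by (unfold fY, p_c; continuity_in_parameter).
  assert (H02 : (fX (1/3) - p) * (fY (1/3) - p) <= 0) by (unfold fX, fY; nra).
  destruct (sign_change_split _ (fX (1/2) - p) _ H02) as [K | K].
  - destruct (IVT_value fX (1/3) (1/2) p CX ltac:(lra) K) as [u [Hu E]].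
    exists u, (1/2). split; auto. left; split; auto.
  - change (fX (1/2)) with (fY (1/2)) in K. rewrite Rmult_comm in K.
    destruct (IVT_value fY (1/3) (1/2) p CY ltac:(lra) K) as [u [Hu E]].
    exists u, u. split; auto. right; split; auto.
Qed.

End Cells.

Lemma p_plus_eq s : p_plus s psi1 psi3 = p_a s (1/2) 0 0 0.
Proof.
  unfold p_plus. rewrite RInt_psi3, RInt_psi1, RInt_mix by lra.
  unfold p_a. ring.
Qed.

Lemma q_minus_eq s : q_minus s psi1 psi3 = p_b s (1/3).
Proof.
  unfold q_minus. rewrite RInt_psi1, RInt_mix by lra. replace (4/3) with (1/3 + 1) by field.
  unfold p_b. ring.
Qed.

Lemma q_plus_eq : q_plus psi1 = Psi1 (1/3 + 1) - Psi1 (1/3).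
Proof. unfold q_plus. rewrite RInt_psi1 by lra. replace (4/3) with (1/3 + 1) by field. reflexivity. Qed.

Lemma Gb_eq s lam : 0 <= lam <= 1/3 -> Gb s psi1 psi3 lam = p_b s lam.
Proof.
  intros Hl. unfold Gb. rewrite RInt_psi3, RInt_psi1, RInt_mix by lra.
  unfold p_b. replace (1 + lam) with (lam + 1) by ring.
  ring.
Qed.

Lemma Gd_eq lam : 1/3 <= lam -> Gd psi1 lam = Psi1 (lam + 1) - Psi1 lam.
Proof. intros. unfold Gd. rewrite RInt_psi1 by lra. f_equal. f_equal. ring. Qed.

Lemma thresholds_order s : 0 < s < 1 ->
  0 < p_plus s psi1 psi3 /\ p_plus s psi1 psi3 < q_minus s psi1 psi3 /\
  q_minus s psi1 psi3 < q_plus psi1.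
Proof.
  intros Hs. rewrite p_plus_eq, q_minus_eq, q_plus_eq. unfold p_a, p_b.
  destruct th_order as [[O0 O1] O2].
  pose proof (Psi1_incr_lb_th1 (1/3) (1/2) ltac:(lra)).
  pose proof (Psi1_incr_lb_th1 (1/2) 1 ltac:(lra)).
  pose proof (Psi1_incr_lb_th1 1 (1/3 + 1) ltac:(lra)).
  pose proof (Psi3_incr_bounds 0 (1/3) ltac:(lra)).
  pose proof (Psi3_incr_bounds (1/3) (1/2) ltac:(lra)).
  assert (0 <= s * (Psi1 (1/2) - Psi1 (1/3))) by (apply Rmult_le_pos; lra).
  assert (0 <= (1 - s) * (Psi3 (1/2) - Psi3 (1/3))) by (apply Rmult_le_pos; lra).
  assert (0 < (1 - s) * ((Psi1 (1/2) - Psi1 (1/3)) - (Psi3 (1/2) - Psi3 (1/3))))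
    by (apply Rmult_lt_0_compat; lra).
  replace (0 + 1) with 1 by ring. split; [| split]; nra.
Qed.

(* The sweep at [s] covers [p >= p_a s 1 1 1 (1/3) = (2 s - 1) A] with [A > 0];
   the rest is the reflection of the sweep at [1 - s], which covers
   [- p >= (1 - 2 s) A]. *)
Lemma cell_a_full s : 0 < s < 1 -> forall p, 0 <= p <= p_plus s psi1 psi3 -> cell_solvable F s p 0.
Proof.
  intros Hs p Hp. rewrite p_plus_eq in Hp.
  destruct (Rle_dec (p_a s 1 1 1 (1/3)) p) as [h | h]; [apply p_a_sweep; auto; lra |].
  assert (Hs' : 0 < 1 - s < 1) by lra.
  assert (C : cell_solvable F (1 - s) (- p) 0).
  { apply p_a_sweep; auto. destruct (thresholds_order (1 - s) Hs') as [P _].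
    rewrite p_plus_eq in P. unfold p_a in *.
    split; nra. }
  apply cell_solvable_reflect in C; [| apply F_even | auto].
  replace (1 - (1 - s)) with s in C by ring. rewrite Ropp_involutive in C. auto.
Qed.

Lemma p_d_sweep p : q_plus psi1 <= p -> exists lam, 1/3 <= lam /\ Psi1 (lam + 1) - Psi1 lam = p.
Proof.
  intros Hp. destruct th_order as [[O0 O1] O2].
  (* psi1e exceeds p at some level L, hence so does the average over [[L, L + 1]]. *)
  destruct (continuity_ab_maj F th1 (Rmax th1 p)) as [xm [Hxm _]];
    [apply Rmax_l | intros; apply continuity_pt_filterlim, F_continuous |].
  set (L := Rmax (1/3) (F xm + 1)).
  assert (HL : 1/3 <= L) by apply Rmax_l.
  assert (Hc : p <= psi1e L).
  { destruct (Rle_dec p (psi1e L)) as [| n]; auto. exfalso.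
    destruct (psi1e_spec L) as [A B].
    assert (F (psi1e L) <= F xm) by (apply Hxm; pose proof (Rmax_r th1 p); lra).
    rewrite B, Rmax_right in H by auto.
    assert (F xm + 1 <= L) by apply Rmax_r. lra. }
  pose proof (Psi1_incr_lb L (L + 1) ltac:(lra)).
  rewrite q_plus_eq in Hp.
  destruct (IVT_value (fun lam => Psi1 (lam + 1) - Psi1 lam) (1/3) L p) as [u [Hu E]]; auto.
  - continuity_in_parameter.
  - replace (L + 1 - L) with 1 in H by ring. cbv beta. nra.
  - exists u. split; [lra | auto].
Qed.

Lemma Hbar_regime_a s : 0 < s < 1 -> forall p, 0 <= p <= p_plus s psi1 psi3 -> Hbar F s p = 0.
Proof. intros Hs p Hp. apply Hbar_eq; auto. apply cell_a_full; auto. Qed.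

Lemma Hbar_regime_b s : 0 < s < 1 -> forall p, p_plus s psi1 psi3 <= p <= q_minus s psi1 psi3 ->
  (0 <= Hbar F s p <= 1/3 /\ p = Gb s psi1 psi3 (Hbar F s p)) /\
  (forall lam, 0 <= lam <= 1/3 -> p = Gb s psi1 psi3 lam -> lam = Hbar F s p).
Proof.
  intros Hs p Hp. apply (Hbar_graph F s (Gb s psi1 psi3) (fun lam => 0 <= lam <= 1/3)); auto.
  - intros lam Hl. rewrite Gb_eq; auto. apply cell_b; auto.
  - rewrite p_plus_eq, q_minus_eq in Hp.
    destruct (p_b_sweep s p) as [lam [Hl E]].
    + left. replace (p_b s 0) with (p_a s (1/2) 0 0 0); [lra |].
      unfold p_a, p_b. replace (0 + 1) with 1 by ring. ring.
    + exists lam. rewrite Gb_eq; auto.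
Qed.

Lemma Hbar_regime_c s : 0 < s < 1 -> forall p, q_minus s psi1 psi3 <= p <= q_plus psi1 ->
  Hbar F s p = 1/3.
Proof.
  intros Hs p Hp. rewrite q_minus_eq, q_plus_eq in Hp.
  destruct (p_c_sweep s p) as (u2 & u1 & Hf & <-).
  - replace (p_c s (1/3) (1/2)) with (p_b s (1/3)) by (unfold p_b, p_c; ring).
    replace (p_c s (1/3) (1/3)) with (Psi1 (1/3 + 1) - Psi1 (1/3)) by (unfold p_c; ring). auto.
  - apply Hbar_eq; auto. apply cell_c; auto.
Qed.

Lemma Hbar_regime_d s : 0 < s < 1 -> forall p, q_plus psi1 <= p ->
  (1/3 <= Hbar F s p /\ p = Gd psi1 (Hbar F s p)) /\
  (forall lam, 1/3 <= lam -> p = Gd psi1 lam -> lam = Hbar F s p).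
Proof.
  intros Hs p Hp. apply (Hbar_graph F s (Gd psi1) (fun lam => 1/3 <= lam)); auto.
  - intros lam Hl. rewrite Gd_eq; auto. apply cell_d; auto.
  - destruct (p_d_sweep p Hp) as [lam [Hl E]]. exists lam. rewrite Gd_eq; auto.
Qed.

End Setting.

Theorem propositionB1 (F : R -> R) (th1 th2 th3 : R) (psi1 psi3 : R -> R) (s : R) :
  F_hyp F th1 th2 th3 ->
  psi1_spec F psi1 th1 ->
  psi3_spec F psi3 th2 ->
  0 < s < 1 ->
  (0 < p_plus s psi1 psi3 /\ p_plus s psi1 psi3 < q_minus s psi1 psi3 /\
   q_minus s psi1 psi3 < q_plus psi1) /\
  (* (a) *)
  (forall p, 0 <= p <= p_plus s psi1 psi3 -> Hbar F s p = 0) /\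
  (* (b) *)
  (forall p, p_plus s psi1 psi3 <= p <= q_minus s psi1 psi3 ->
     (0 <= Hbar F s p <= 1/3 /\ p = Gb s psi1 psi3 (Hbar F s p)) /\
     (forall lam, 0 <= lam <= 1/3 -> p = Gb s psi1 psi3 lam -> lam = Hbar F s p)) /\
  (* (c) *)
  (forall p, q_minus s psi1 psi3 <= p <= q_plus psi1 -> Hbar F s p = 1/3) /\
  (* (d) *)
  (forall p, q_plus psi1 <= p ->
     (1/3 <= Hbar F s p /\ p = Gd psi1 (Hbar F s p)) /\
     (forall lam, 1/3 <= lam -> p = Gd psi1 lam -> lam = Hbar F s p)) /\
  (* (e) *)
  (forall p, p < 0 -> Hbar F s p = Hbar F (1 - s) (- p)).
Proof.
  intros HF H1 H3 Hs.
  split; [| split; [| split; [| split; [| split]]]].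
  - eapply thresholds_order; eauto.
  - eapply Hbar_regime_a; eauto.
  - eapply Hbar_regime_b; eauto.
  - eapply Hbar_regime_c; eauto.
  - eapply Hbar_regime_d; eauto.
  - intros p _. apply Hbar_reflect; auto. eapply F_even; eauto.
Qed.
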